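(* Fix $i$ and let $N_{i1},\dots,N_{iT_i}$ be independent with $N_{it}\sim\mathrm{NB}(\lambda_{it},\alpha)$, where $\lambda_{it}=\exp(x_{it}^T\beta)$ for fixed covariates $x_{it}\in\mathbb{R}^p$ and $\alpha>0$. Let $\ell_i(\beta,\alpha)=\sum_t\log\Pr(N_{it})$ be the negative binomial log-likelihood, so that $\frac{\partial\ell_i}{\partial\beta}=\sum_t\frac{N_{it}-\lambda_{it}}{1+\alpha\lambda_{it}}x_{it}$, and let $$\frac{\partial\ell_i}{\partial\sigma^2}:=\frac12\left(\Big(\sum_t\frac{N_{it}-\lambda_{it}}{1+\alpha\lambda_{it}}\Big)^2-\sum_t\frac{N_{it}(1+\alpha\lambda_{it})^2-\alpha^2N_{it}\lambda_{it}^2-\alpha\lambda_{it}^2}{(1+\alpha\lambda_{it})^2}\right)$$ denote the score for $\sigma^2$ at $\sigma^2=0$. Then $$E\Big[\Big(\frac{\partial\ell_i}{\partial\sigma^2}\Big)^2\Big]=\frac14\left(\sum_t\frac{2\lambda_{it}^2(1+\alpha)}{(1+\alpha\lambda_{it})^2}+4\sum_{t<t'}\frac{\lambda_{it}(1+\alpha\lambda_{it})}{(1+\alpha\lambda_{it})^2}\frac{\lambda_{it'}(1+\alpha\lambda_{it'})}{(1+\alpha\lambda_{it'})^2}\right),$$ $$E\Big[\frac{\partial\ell_i}{\partial\sigma^2}\frac{\partial\ell_i}{\partial\beta}\Big]=0,\qquad E\Big[\frac{\partial\ell_i}{\partial\sigma^2}\frac{\partial\ell_i}{\partial\alpha}\Big]=\frac12\sum_t\frac{\lambda_{it}^2}{(1+\alpha\lambda_{it})^2},\qquad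 E\Big[-\frac{\partial^2\ell_i}{\partial\beta\,\partial\alpha}\Big]=0,$$ $$E\Big[\Big(\frac{\partial\ell_i}{\partial\alpha}\Big)^2\Big]=\sum_t\alpha^{-4}\left(\sum_{j=0}^\infty(\alpha^{-1}+j)^{-2}\Pr(N_{it}\ge j+1)-\frac{\alpha\lambda_{it}}{\lambda_{it}+\alpha^{-1}}\right).$$
   Context: $\mathrm{NB}(\lambda,\alpha)$ is the negative binomial distribution with mean $\lambda$ and variance $\lambda+\alpha\lambda^2$: $\Pr(N=n)=\frac{\Gamma(n+1/\alpha)}{\Gamma(1/\alpha)\,n!}\left(\frac{1}{1+\alpha\lambda}\right)^{1/\alpha}\left(\frac{\alpha\lambda}{1+\alpha\lambda}\right)^n$. The quantity $\partial\ell_i/\partial\sigma^2$ is the score, at $\sigma^2=0$, for the variance $\sigma^2$ of a mean-one shared random effect $\theta_i$ in the model $N_{it}\mid\theta_i\sim\mathrm{NB}(\lambda_{it}\theta_i,\alpha)$. *)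

From Stdlib Require Import Reals Lra Arith Factorial.
From Coquelicot Require Import Coquelicot.
Open Scope R_scope.

Fixpoint sumT (n : nat) (f : nat -> R) : R :=
  match n with O => 0 | S m => sumT m f + f m end.

(* rising factorial r (r+1) ... (r+n-1) = Gamma(n+r)/Gamma(r)  (r > 0) *)
Fixpoint rising (r : R) (n : nat) : R :=
  match n with O => 1 | S m => rising r m * (r + INR m) end.

Definition nb_pmf (lam a : R) (n : nat) : R :=
  rising (/ a) n / INR (Factorial.fact n)
  * Rpower (/ (1 + a * lam)) (/ a)
  * (a * lam / (1 + a * lam)) ^ n.

Definition upd {A : Type} (f : nat -> A) (k : nat) (v : A) : nat -> A :=
  fun j => if Nat.eqb j k then v else f j.

(* covariates x t k (t < T, k < p), coefficient vector b k (k < p) *)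
Definition lam (p : nat) (x : nat -> nat -> R) (b : nat -> R) (t : nat) : R :=
  exp (sumT p (fun k => x t k * b k)).

Definition loglik (T p : nat) (x : nat -> nat -> R) (b : nat -> R) (a : R)
  (N : nat -> nat) : R :=
  sumT T (fun t => ln (nb_pmf (lam p x b t) a (N t))).

Definition score_beta T p x b a N (k : nat) : R :=
  Derive (fun bk => loglik T p x (upd b k bk) a N) (b k).

Definition score_alpha T p x b a N : R :=
  Derive (fun a' => loglik T p x b a' N) a.

Definition d2_beta_alpha T p x b a N (k : nat) : R :=
  Derive (fun a' => score_beta T p x b a' N k) a.

Definition score_sigma2 (T : nat) (l : nat -> R) (a : R) (N : nat -> nat) : R :=
  / 2 * ((sumT T (fun t => (INR (N t) - l t) / (1 + a * l t))) ^ 2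
   - sumT T (fun t => (INR (N t) * (1 + a * l t) ^ 2 - a ^ 2 * INR (N t) * l t ^ 2
                       - a * l t ^ 2) / (1 + a * l t) ^ 2)).

(* Expectation of f(N_0,...,N_{T-1}) for independent N_t with pmf pm t:
   iterated series over the coordinates. *)
Fixpoint Eiter (pm : nat -> nat -> R) (k : nat) (f : (nat -> nat) -> R)
  (env : nat -> nat) : R :=
  match k with
  | O => f env
  | S m => Series (fun n => pm m n * Eiter pm m f (upd env m n))
  end.

Definition Expect (T : nat) (pm : nat -> nat -> R) (f : (nat -> nat) -> R) : R :=
  Eiter pm T f (fun _ => O).

Definition tail_prob (q : nat -> R) (m : nat) : R := Series (fun n => q (n + m)%nat).

(* With [r = 1/α] and [q = αλ/(1 + αλ)], NB(λ, α) is the law [nbcoef r n q^n (1 - q)^r].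
   Its moments follow from the Stein identity [(1 + αλ) E[N h(N)] = λ E[(1 + αN) h(N + 1)]].
   The shape parameter enters the log-likelihood through the digamma increment [harm r N],
   and [E[harm r N] = -ln (1 - q)], [E[harm r N ^ 2 - harm2 r N] = ln (1 - q) ^ 2]: by the
   coefficient recurrences, [(1 - y)^r] times the generating series of [nbcoef r n],
   [nbcoef r n * harm r n] and [nbcoef r n * (harm r n ^ 2 - harm2 r n)] has the same
   derivative as [1], [-ln (1 - y)] and [ln (1 - y) ^ 2].  Summation by parts turns
   [E[harm2 r N]] into the tail sum.

   Writing [u_t = (N_t - λ_t)/(1 + αλ_t)] and [g_t = u_t^2 - v_t] ([v_t] the t-th term of
   the second sum), the σ²-score is [Σ_(t<t') u_t u_t' + Σ_t g_t / 2], and all scores are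
   sums of functions of single observations.  Integrating out the independent observations
   one at a time reduces every claim to the single-observation facts
   [E u = E g = E[u g] = E[∂_α log Pr] = 0], [E u^2 = λ/(1 + αλ)],
   [E g^2 = 2λ^2 (1 + α)/(1 + αλ)^2] and [E[g ∂_α log Pr] = λ^2/(1 + αλ)^2]. *)

From Stdlib Require Import Reals Lra Lia Factorial List.
From Coquelicot Require Import Coquelicot.
Import ListNotations.
Open Scope R_scope.

Lemma sumT_ext n f g : (forall k, (k < n)%nat -> f k = g k) -> sumT n f = sumT n g.
Proof. induction n as [|n IH]; intros H; simpl; [reflexivity|]. rewrite IH, H; auto. Qed.

Lemma sumT_zero n f : (forall k, (k < n)%nat -> f k = 0) -> sumT n f = 0.
Proof. induction n as [|n IH]; intros H; simpl; [reflexivity|]. rewrite IH, H; auto; ring. Qed.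

Lemma sumT_nonneg n f : (forall k, 0 <= f k) -> 0 <= sumT n f.
Proof. intros H; induction n as [|n IH]; simpl; [lra|]. specialize (H n); lra. Qed.

Lemma sumT_scal n c f : sumT n (fun k => c * f k) = c * sumT n f.
Proof. induction n as [|n IH]; simpl; [ring|]. rewrite IH; ring. Qed.

Lemma sumT_opp n f : sumT n (fun k => - f k) = - sumT n f.
Proof. induction n as [|n IH]; simpl; [ring|]. rewrite IH; ring. Qed.

Lemma sumT_sum_f_R0 n f : sumT (S n) f = sum_f_R0 f n.
Proof.
  induction n as [|n IH]; [simpl; ring|].
  change (sumT (S n) f + f (S n) = sum_f_R0 f n + f (S n)). now rewrite IH.
Qed.

Lemma sumT_kronecker (y : nat -> R) p k : (k < p)%nat ->
  sumT p (fun j => y j * (if Nat.eqb j k then 1 else 0)) = y k.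
Proof.
  induction p as [|p IH]; intros Hk; [lia|]. simpl.
  destruct (Nat.eqb_spec p k) as [->|Hpk].
  - rewrite sumT_zero; [ring|]. intros j Hj. destruct (Nat.eqb_spec j k); [lia|ring].
  - rewrite IH by lia. ring.
Qed.

Lemma sumT_pairs_S (y : nat -> R) m :
  sumT (S m) (fun t => sumT (S m) (fun t' => if (t <? t')%nat then y t * y t' else 0))
  = sumT m (fun t => sumT m (fun t' => if (t <? t')%nat then y t * y t' else 0)) + sumT m y * y m.
Proof.
  cbn [sumT].
  rewrite (sumT_zero m (fun t' => if (m <? t')%nat then y m * y t' else 0))
    by (intros j Hj; destruct (Nat.ltb_spec m j); [lia|reflexivity]).
  destruct (Nat.ltb_spec m m); [lia|].
  assert (Hrow : forall n, (n <= m)%nat ->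
    sumT n (fun t => sumT m (fun t' => if (t <? t')%nat then y t * y t' else 0)
                     + (if (t <? m)%nat then y t * y m else 0))
    = sumT n (fun t => sumT m (fun t' => if (t <? t')%nat then y t * y t' else 0)) + sumT n y * y m).
  { induction n as [|n IH]; intros Hn; simpl; [ring|].
    rewrite IH by lia. destruct (Nat.ltb_spec n m); [ring|lia]. }
  rewrite Hrow by lia. ring.
Qed.

Lemma ex_series_Rscal c (a : nat -> R) : ex_series a -> ex_series (fun n => c * a n).
Proof. exact (ex_series_scal_l c a). Qed.

Lemma ex_series_Rplus (a b : nat -> R) :
  ex_series a -> ex_series b -> ex_series (fun n => a n + b n).
Proof. exact (ex_series_plus a b). Qed.

Lemma ex_series_Rle (a b : nat -> R) :
  (forall n, Rabs (a n) <= b n) -> ex_series b -> ex_series a.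
Proof. apply (@ex_series_le R_AbsRing R_CompleteNormedModule). Qed.

Lemma Series_nonneg a : (forall n, 0 <= a n) -> ex_series a -> 0 <= Series a.
Proof.
  intros Ha Ea. rewrite <- (Rmult_0_l (Series a)), <- Series_scal_l.
  apply Series_le; auto. intros n; specialize (Ha n); lra.
Qed.

Lemma Series_tail (a : nat -> R) m :
  ex_series a -> Series (fun n => a (n + m)%nat) = Series a - sumT m a.
Proof.
  intros Ea. destruct m as [|m].
  - simpl. rewrite Rminus_0_r. apply Series_ext. intros; now rewrite Nat.add_0_r.
  - rewrite (Series_incr_n a (S m)) by (lia || auto). simpl pred. rewrite <- sumT_sum_f_R0.
    rewrite (Series_ext _ (fun k => a (S m + k)%nat)) by (intros; f_equal; lia). ring.
Qed.

Lemma ex_series_shift (a : nat -> R) m : ex_series a -> ex_series (fun n => a (n + m)%nat).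
Proof.
  intros Ea. apply (ex_series_ext (fun n => a (m + n)%nat)); [intros; f_equal; lia|].
  now apply ex_series_incr_n.
Qed.

Lemma term_le_Series a n : (forall n, 0 <= a n) -> ex_series a -> a n <= Series a.
Proof.
  intros Ha Ea.
  assert (Htail := Series_nonneg (fun k => a (k + S n)%nat) (fun k => Ha _)).
  rewrite Series_tail in Htail by auto.
  assert (0 <= sumT n a) by (apply sumT_nonneg; auto).
  cbn [sumT] in Htail. enough (0 <= Series a - (sumT n a + a n)) by lra.
  now apply Htail, ex_series_shift.
Qed.

Lemma is_lim_seq_sumT (a : nat -> R) : ex_series a -> is_lim_seq (fun J => sumT J a) (Series a).
Proof.
  intros Ea. apply Series_correct, is_series_Reals, is_lim_seq_Reals in Ea.
  apply is_lim_seq_incr_1, (is_lim_seq_ext (sum_f_R0 a)); auto.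
  intros; now rewrite sumT_sum_f_R0.
Qed.

Lemma Series_of_lim_sumT (a : nat -> R) (l : R) :
  is_lim_seq (fun J => sumT J a) l -> Series a = l.
Proof.
  intros Hl. apply is_series_unique, is_series_Reals, is_lim_seq_Reals.
  apply (is_lim_seq_ext (fun J => sumT (S J) a)); [intros; apply sumT_sum_f_R0|].
  now apply (is_lim_seq_incr_1 (fun J => sumT J a)).
Qed.

Lemma is_lim_seq_index_mul_tail (p : nat -> R) :
  (forall n, 0 <= p n) -> ex_series p -> ex_series (fun n => p n * INR n) ->
  is_lim_seq (fun J => INR J * Series (fun n => p (n + J)%nat)) 0.
Proof.
  intros Hp Ep Epn.
  set (Snp := Series (fun n => p n * INR n)).
  apply is_lim_seq_le_le with (fun _ => 0) (fun J => Snp - sumT J (fun n => p n * INR n)).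
  - intros J. unfold Snp. rewrite <- (Series_tail (fun n => p n * INR n)) by auto.
    split.
    + apply Rmult_le_pos; [apply pos_INR|apply Series_nonneg; auto]. now apply ex_series_shift.
    + rewrite <- Series_scal_l. apply Series_le; [|now apply (ex_series_shift (fun n => p n * INR n))].
      intros n. pose proof (Hp (n + J)%nat). rewrite plus_INR. pose proof (pos_INR n).
      pose proof (pos_INR J). split; [apply Rmult_le_pos; lra|].
      assert (0 <= p (n + J)%nat * INR n) by (apply Rmult_le_pos; lra). lra.
  - apply is_lim_seq_const.
  - replace (Finite 0) with (Finite (Snp - Snp)) by (f_equal; ring).
    apply is_lim_seq_minus'; [apply is_lim_seq_const|now apply is_lim_seq_sumT].
Qed.

(* Summation by parts; the boundary term [sumT J d * Pr(N >= J)] vanishes because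
   [J * Pr(N >= J) -> 0] when [N] has a finite mean. *)
Lemma Series_weighted_tails (p d : nat -> R) K :
  (forall n, 0 <= p n) -> (forall j, 0 <= d j) -> (forall J, sumT J d <= K * INR J) ->
  ex_series p -> ex_series (fun n => p n * INR n) -> ex_series (fun n => p n * sumT n d) ->
  Series (fun j => d j * Series (fun n => p (n + S j)%nat)) = Series (fun n => p n * sumT n d).
Proof.
  intros Hp Hd HK Ep Epn Epd.
  assert (Hpartial : forall J,
    sumT J (fun j => d j * Series (fun n => p (n + S j)%nat))
    = sumT J (fun n => p n * sumT n d) + sumT J d * Series (fun n => p (n + J)%nat)).
  { induction J as [|J IH]; simpl; [ring|].
    rewrite IH, !Series_tail by auto. simpl. ring. }
  apply Series_of_lim_sumT.
  apply (is_lim_seq_ext (fun J => sumT J (fun n => p n * sumT n d)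
                                  + sumT J d * Series (fun n => p (n + J)%nat)));
    [intros; now rewrite Hpartial|].
  replace (Series (fun n => p n * sumT n d)) with (Series (fun n => p n * sumT n d) + 0) by ring.
  apply is_lim_seq_plus'; [now apply is_lim_seq_sumT|].
  apply is_lim_seq_le_le with (fun _ => 0) (fun J => Rabs K * (INR J * Series (fun n => p (n + J)%nat))).
  - intros J.
    assert (HT : 0 <= Series (fun n => p (n + J)%nat))
      by (apply Series_nonneg; auto using ex_series_shift).
    assert (0 <= sumT J d) by now apply sumT_nonneg.
    assert (sumT J d <= Rabs K * INR J).
    { eapply Rle_trans; [apply HK|]. apply Rmult_le_compat_r; [apply pos_INR|apply Rle_abs]. }
    split; [apply Rmult_le_pos; lra|]. rewrite <- Rmult_assoc. apply Rmult_le_compat_r; lra.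
  - apply is_lim_seq_const.
  - replace (Finite 0) with (Rbar_mult (Rabs K) 0) by (simpl; f_equal; ring).
    apply is_lim_seq_scal_l. now apply is_lim_seq_index_mul_tail.
Qed.

(** * Negative binomial coefficients and their generating functions *)

Lemma rising_pos s n : 0 < s -> 0 < rising s n.
Proof.
  intros Hs; induction n as [|n IH]; simpl; [lra|].
  apply Rmult_lt_0_compat; auto. pose proof (pos_INR n); lra.
Qed.

Lemma rising_add r n k : rising r (n + k) = rising r n * rising (r + INR n) k.
Proof.
  induction k as [|k IH]; simpl; [rewrite Nat.add_0_r; ring|].
  rewrite Nat.add_succ_r; simpl. rewrite IH, plus_INR. ring.
Qed.

Lemma INR_fact_pos n : 0 < INR (fact n).
Proof. apply lt_0_INR, lt_O_fact. Qed.

(* [nbcoef s n] is the binomial coefficient C(n + s - 1, n). *)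
Definition nbcoef (s : R) (n : nat) : R := rising s n / INR (fact n).

Lemma nbcoef_pos s n : 0 < s -> 0 < nbcoef s n.
Proof. intros Hs. apply Rdiv_lt_0_compat; [now apply rising_pos|apply INR_fact_pos]. Qed.

Lemma nbcoef_S s n : nbcoef s (S n) = nbcoef s n * (s + INR n) / (INR n + 1).
Proof.
  unfold nbcoef. simpl rising. rewrite fact_simpl, mult_INR, S_INR.
  pose proof (INR_fact_pos n). pose proof (pos_INR n). field. lra.
Qed.

Lemma nbcoef_shift s n k :
  nbcoef s n * rising (s + INR n) k = rising s k * nbcoef (s + INR k) n.
Proof.
  unfold nbcoef, Rdiv.
  replace (rising s n * / INR (fact n) * rising (s + INR n) k)
    with (rising s n * rising (s + INR n) k * / INR (fact n)) by ring.
  rewrite <- rising_add, Nat.add_comm, rising_add. ring.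
Qed.

Lemma CV_radius_nbcoef s : 0 < s -> CV_radius (nbcoef s) = 1.
Proof.
  intros Hs. rewrite (CV_radius_finite_DAlembert _ 1); [f_equal; field| |lra|].
  { intros n. pose proof (nbcoef_pos s n Hs); lra. }
  apply is_lim_seq_ext with (fun n => 1 + (s - 1) * / INR (S n)).
  { intros n. rewrite nbcoef_S, S_INR. pose proof (nbcoef_pos s n Hs). pose proof (pos_INR n).
    rewrite Rabs_pos_eq; [field; lra|].
    apply Rlt_le, Rdiv_lt_0_compat; [apply Rdiv_lt_0_compat; [apply Rmult_lt_0_compat|]|]; lra. }
  assert (Hinv : is_lim_seq (fun n => / INR (S n)) 0).
  { apply (is_lim_seq_incr_1 (fun n => / INR n)).
    replace (Finite 0) with (Rbar_inv p_infty) by reflexivity.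
    apply is_lim_seq_inv; [apply is_lim_seq_INR|discriminate]. }
  assert (Hscal := is_lim_seq_scal_l _ (s - 1) _ Hinv).
  replace (Rbar_mult (s - 1) 0) with (Finite 0) in Hscal by (simpl; f_equal; ring).
  assert (Hsum := is_lim_seq_plus' _ _ _ _ (is_lim_seq_const 1) Hscal).
  now rewrite Rplus_0_r in Hsum.
Qed.

Lemma ex_series_nbcoef s x :
  0 < s -> Rabs x < 1 -> ex_series (fun n => Rabs (nbcoef s n * x ^ n)).
Proof. intros Hs Hx. apply CV_disk_inside. now rewrite CV_radius_nbcoef. Qed.

Lemma CV_radius_dominated (b : nat -> R) s K x :
  0 < s -> (forall n, Rabs (b n) <= K * nbcoef s n) ->
  Rabs x < 1 -> Rbar_lt (Rabs x) (CV_radius b).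
Proof.
  intros Hs Hb Hx.
  set (z := (Rabs x + 1) / 2).
  assert (Hz : Rabs x < z < 1) by (unfold z; lra).
  assert (Hz0 : 0 <= z) by (pose proof (Rabs_pos x); lra).
  assert (Hle : Rbar_le z (CV_radius b)).
  { apply (proj1 (CV_radius_bounded b)).
    exists (Rabs K * Series (fun n => Rabs (nbcoef s n * z ^ n))). intros n.
    assert (Hterm := term_le_Series (fun n => Rabs (nbcoef s n * z ^ n)) n
                       (fun n => Rabs_pos _) (ex_series_nbcoef s z Hs ltac:(rewrite Rabs_pos_eq; lra))).
    cbv beta in Hterm. rewrite Rabs_mult in *.
    rewrite (Rabs_pos_eq (nbcoef s n)) in Hterm by (apply Rlt_le, nbcoef_pos; auto).
    apply Rle_trans with (Rabs K * nbcoef s n * Rabs (z ^ n)).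
    - apply Rmult_le_compat_r; [apply Rabs_pos|].
      eapply Rle_trans; [apply Hb|].
      apply Rmult_le_compat_r; [apply Rlt_le, nbcoef_pos; auto|apply Rle_abs].
    - rewrite Rmult_assoc. apply Rmult_le_compat_l; [apply Rabs_pos|exact Hterm]. }
  destruct (CV_radius b) as [r| |]; simpl in *; auto; lra.
Qed.

Lemma PSeries_recurrence_ode (b f : nat -> R) r x :
  (forall n, INR (S n) * b (S n) = (r + INR n) * b n + f n) ->
  Rbar_lt (Rabs x) (CV_radius b) -> Rbar_lt (Rabs x) (CV_radius f) ->
  (1 - x) * PSeries (PS_derive b) x = r * PSeries b x + PSeries f x.
Proof.
  intros Hrec Hb Hf.
  assert (Hd : Rbar_lt (Rabs x) (CV_radius (PS_derive b))) by now rewrite CV_radius_derive.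
  assert (Eb := ex_series_Rabs _ (CV_disk_inside _ _ Hb)).
  assert (Ef := ex_series_Rabs _ (CV_disk_inside _ _ Hf)).
  assert (Ed := ex_series_Rabs _ (CV_disk_inside _ _ Hd)).
  assert (En : ex_series (fun k => INR k * b k * x ^ k)).
  { apply ex_series_incr_1, (ex_series_ext (fun k => x * (PS_derive b k * x ^ k))).
    - intros k. unfold PS_derive. simpl. ring.
    - now apply ex_series_Rscal. }
  assert (Sn : Series (fun k => INR k * b k * x ^ k) = x * PSeries (PS_derive b) x).
  { rewrite Series_incr_1 by auto. unfold PSeries. rewrite <- Series_scal_l. simpl.
    rewrite !Rmult_0_l, Rplus_0_l. apply Series_ext. intros k. unfold PS_derive. simpl. ring. }
  assert (Hsplit : PSeries (PS_derive b) x
                   = r * PSeries b x + Series (fun k => INR k * b k * x ^ k) + PSeries f x).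
  { unfold PSeries. assert (E1 := ex_series_Rscal r _ Eb).
    rewrite <- Series_scal_l, <- (Series_plus _ _ E1 En),
      <- (Series_plus _ _ (ex_series_Rplus _ _ E1 En) Ef).
    apply Series_ext. intros k. unfold PS_derive. rewrite Hrec. ring. }
  rewrite Sn in Hsplit. lra.
Qed.

Lemma is_derive_Rpower_1m r y :
  y < 1 -> is_derive (fun z => Rpower (1 - z) r) y (- r * Rpower (1 - y) r / (1 - y)).
Proof.
  intros Hy. unfold Rpower. auto_derive; [lra|].
  replace (1 + - y) with (1 - y) by ring. field. lra.
Qed.

Lemma is_derive_ln_1m y : y < 1 -> is_derive (fun z => ln (1 - z)) y (- / (1 - y)).
Proof. intros Hy. auto_derive; [lra|]. field. lra. Qed.

(* If [b] solves the recurrence, then [PSeries b] solves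
   [(1 - y) B' = r B + F], whence [((1 - y)^r B)' = (1 - y)^r F / (1 - y)]. *)
Lemma is_derive_Rpower_PSeries (b f : nat -> R) r y :
  (forall n, INR (S n) * b (S n) = (r + INR n) * b n + f n) -> y < 1 ->
  Rbar_lt (Rabs y) (CV_radius b) -> Rbar_lt (Rabs y) (CV_radius f) ->
  is_derive (fun z => Rpower (1 - z) r * PSeries b z) y
            (Rpower (1 - y) r * PSeries f y / (1 - y)).
Proof.
  intros Hrec Hy Hb Hf.
  assert (Hode := PSeries_recurrence_ode b f r y Hrec Hb Hf).
  replace (Rpower (1 - y) r * PSeries f y / (1 - y))
    with (plus (mult (- r * Rpower (1 - y) r / (1 - y)) (PSeries b y))
               (mult (Rpower (1 - y) r) (PSeries (PS_derive b) y))).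
  - apply (is_derive_mult (fun z => Rpower (1 - z) r) (PSeries b)).
    + now apply is_derive_Rpower_1m.
    + now apply is_derive_PSeries.
    + intros; apply Rmult_comm.
  - unfold plus, mult; simpl.
    replace (PSeries f y) with ((1 - y) * PSeries (PS_derive b) y - r * PSeries b y) by lra.
    field. lra.
Qed.

Lemma const_of_derive_0 (f : R -> R) :
  (forall y, -1 < y < 1 -> is_derive f y 0) -> forall x, -1 < x < 1 -> f x = f 0.
Proof.
  intros Hd x Hx.
  destruct (MVT_gen f 0 x (fun _ => 0)) as [c [_ Heq]]; [| |lra].
  - intros y Hy. apply Hd. unfold Rmin, Rmax in Hy; destruct (Rle_dec 0 x); lra.
  - intros y Hy. apply continuity_pt_filterlim, (@ex_derive_continuous R_AbsRing R_NormedModule).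
    exists 0. apply Hd. unfold Rmin, Rmax in Hy; destruct (Rle_dec 0 x); lra.
Qed.

Lemma Rpower_1m_0 r : Rpower (1 - 0) r = 1.
Proof. unfold Rpower. now rewrite Rminus_0_r, ln_1, Rmult_0_r, exp_0. Qed.

Lemma CV_radius_nbcoef_gt s x : 0 < s -> -1 < x < 1 -> Rbar_lt (Rabs x) (CV_radius (nbcoef s)).
Proof. intros Hs Hx. rewrite CV_radius_nbcoef by auto. simpl. apply Rabs_def1; lra. Qed.

Lemma PSeries_nbcoef s x : 0 < s -> -1 < x < 1 -> Rpower (1 - x) s * PSeries (nbcoef s) x = 1.
Proof.
  intros Hs Hx.
  rewrite (const_of_derive_0 (fun y => Rpower (1 - y) s * PSeries (nbcoef s) y)); auto.
  - rewrite PSeries_0, Rpower_1m_0. unfold nbcoef. simpl. field.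
  - intros y Hy. replace 0 with (Rpower (1 - y) s * PSeries (fun _ => 0) y / (1 - y))
      by (rewrite PSeries_const_0; field; lra).
    apply is_derive_Rpower_PSeries; [|lra|now apply CV_radius_nbcoef_gt|].
    + intros n. rewrite nbcoef_S, S_INR. pose proof (pos_INR n). field. lra.
    + rewrite CV_radius_const_0. exact I.
Qed.

(* [harm r n = ψ(r + n) - ψ(r)] and [harm2 r n = ψ'(r) - ψ'(r + n)]. *)
Definition harm (r : R) (n : nat) : R := sumT n (fun j => / (r + INR j)).
Definition harm2 (r : R) (n : nat) : R := sumT n (fun j => / (r + INR j) ^ 2).

Lemma harm_S r n : harm r (S n) = harm r n + / (r + INR n).
Proof. reflexivity. Qed.

Lemma harm2_S r n : harm2 r (S n) = harm2 r n + / (r + INR n) ^ 2.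
Proof. reflexivity. Qed.

Lemma harm_bounds r n : 0 < r -> 0 <= harm r n <= INR n / r.
Proof.
  intros Hr. induction n as [|n IH]; [unfold harm; simpl; unfold Rdiv; lra|].
  rewrite harm_S. rewrite S_INR.
  pose proof (pos_INR n).
  assert (0 < / (r + INR n) <= / r).
  { split; [apply Rinv_0_lt_compat; lra|apply Rinv_le_contravar; lra]. }
  unfold Rdiv in *. rewrite Rmult_plus_distr_r. lra.
Qed.

Lemma harm2_bounds r n : 0 < r -> 0 <= harm2 r n <= INR n / r ^ 2.
Proof.
  intros Hr. induction n as [|n IH]; [unfold harm2; simpl; unfold Rdiv; lra|].
  rewrite harm2_S. rewrite S_INR.
  pose proof (pos_INR n).
  assert (0 < / (r + INR n) ^ 2 <= / r ^ 2).
  { split; [apply Rinv_0_lt_compat, pow_lt; lra|].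
    apply Rinv_le_contravar; [apply pow_lt; lra|apply pow_incr; lra]. }
  unfold Rdiv in *. rewrite Rmult_plus_distr_r. lra.
Qed.

Lemma nbcoef_harm_le r n : 0 < r -> nbcoef r n * harm r n <= nbcoef (r + 1) n.
Proof.
  intros Hr. pose proof (nbcoef_pos r n Hr). destruct (harm_bounds r n Hr) as [_ Hle].
  pose proof (pos_INR n).
  assert (Hshift := nbcoef_shift r n 1). simpl in Hshift.
  rewrite !Rmult_1_l, !Rplus_0_r in Hshift.
  apply Rmult_le_reg_l with r; auto. rewrite <- Hshift.
  replace (r * (nbcoef r n * harm r n)) with (nbcoef r n * (r * harm r n)) by ring.
  apply Rmult_le_compat_l; [lra|].
  enough (r * harm r n <= INR n) by lra.
  apply Rmult_le_reg_r with (/ r); [apply Rinv_0_lt_compat; lra|].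
  replace (r * harm r n * / r) with (harm r n) by (field; lra). exact Hle.
Qed.

Lemma nbcoef_harm_sq_le r n : 0 < r ->
  Rabs (nbcoef r n * (harm r n ^ 2 - harm2 r n)) <= (r + 1) / r * nbcoef (r + 2) n.
Proof.
  intros Hr. pose proof (nbcoef_pos r n Hr). pose proof (pos_INR n).
  destruct (harm_bounds r n Hr), (harm2_bounds r n Hr).
  assert (Hshift := nbcoef_shift r n 2). simpl in Hshift.
  rewrite !Rmult_1_l, !Rplus_0_r in Hshift. replace (1 + 1) with 2 in Hshift by ring.
  rewrite Rabs_mult, Rabs_pos_eq by lra.
  assert (Habs : Rabs (harm r n ^ 2 - harm2 r n) <= (INR n / r) ^ 2 + INR n / r ^ 2).
  { assert (harm r n ^ 2 <= (INR n / r) ^ 2) by (apply pow_incr; lra).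
    assert (0 <= harm r n ^ 2) by apply pow2_ge_0. apply Rabs_le. lra. }
  apply Rle_trans with (nbcoef r n * ((INR n / r) ^ 2 + INR n / r ^ 2)); [apply Rmult_le_compat_l; lra|].
  replace ((r + 1) / r * nbcoef (r + 2) n)
    with (nbcoef r n * ((r + INR n) * (r + INR n + 1)) / r ^ 2) by (rewrite Hshift; field; lra).
  unfold Rdiv. rewrite Rmult_assoc. apply Rmult_le_compat_l; [lra|].
  replace ((INR n * / r) ^ 2 + INR n * / r ^ 2) with ((INR n * INR n + INR n) * / r ^ 2) by (field; lra).
  apply Rmult_le_compat_r; [apply Rlt_le, Rinv_0_lt_compat, pow_lt; lra|nra].
Qed.

Lemma CV_radius_nbcoef_harm r c x : 0 < r -> 0 <= c -> -1 < x < 1 ->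
  Rbar_lt (Rabs x) (CV_radius (fun n => c * (nbcoef r n * harm r n))).
Proof.
  intros Hr Hc Hx. apply (CV_radius_dominated _ (r + 1) c); [lra| |apply Rabs_def1; lra].
  intros n. pose proof (nbcoef_pos r n Hr). destruct (harm_bounds r n Hr).
  rewrite Rabs_pos_eq by (apply Rmult_le_pos; [|apply Rmult_le_pos]; lra).
  apply Rmult_le_compat_l; [lra|now apply nbcoef_harm_le].
Qed.

Lemma PSeries_nbcoef_harm r x : 0 < r -> -1 < x < 1 ->
  Rpower (1 - x) r * PSeries (fun n => nbcoef r n * harm r n) x = - ln (1 - x).
Proof.
  intros Hr Hx.
  enough (Rpower (1 - x) r * PSeries (fun n => nbcoef r n * harm r n) x + ln (1 - x) = 0) by lra.
  rewrite (const_of_derive_0 (fun y => Rpower (1 - y) r * PSeries (fun n => nbcoef r n * harm r n) y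
                                        + ln (1 - y))); auto.
  - rewrite PSeries_0, Rminus_0_r, ln_1. unfold harm. simpl. ring.
  - intros y Hy.
    replace 0 with (Rpower (1 - y) r * PSeries (nbcoef r) y / (1 - y) + - / (1 - y))
      by (rewrite PSeries_nbcoef by auto; field; lra).
    apply (is_derive_plus (fun y => Rpower (1 - y) r * PSeries (fun n => nbcoef r n * harm r n) y)).
    + apply is_derive_Rpower_PSeries; [|lra| |now apply CV_radius_nbcoef_gt].
      * intros n. rewrite nbcoef_S. rewrite harm_S.
        rewrite S_INR. pose proof (pos_INR n). field. lra.
      * rewrite (CV_radius_ext _ (fun n => 1 * (nbcoef r n * harm r n))) by (intros; ring).
        apply CV_radius_nbcoef_harm; auto; lra.
    + apply is_derive_ln_1m. lra.
Qed.

Lemma PSeries_nbcoef_harm_sq r x : 0 < r -> -1 < x < 1 ->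
  Rpower (1 - x) r * PSeries (fun n => nbcoef r n * (harm r n ^ 2 - harm2 r n)) x
  = ln (1 - x) ^ 2.
Proof.
  intros Hr Hx.
  set (E := PSeries (fun n => nbcoef r n * (harm r n ^ 2 - harm2 r n))).
  enough (Rpower (1 - x) r * E x - ln (1 - x) ^ 2 = 0) by lra.
  rewrite (const_of_derive_0 (fun y => Rpower (1 - y) r * E y - ln (1 - y) ^ 2)); auto.
  - unfold E. rewrite PSeries_0, Rminus_0_r, ln_1. unfold harm, harm2. simpl. ring.
  - intros y Hy.
    assert (H2G : PSeries (fun n => 2 * (nbcoef r n * harm r n)) y
                  = 2 * PSeries (fun n => nbcoef r n * harm r n) y).
    { unfold PSeries. rewrite <- Series_scal_l. apply Series_ext; intros; ring. }
    replace 0 with (Rpower (1 - y) r * PSeries (fun n => 2 * (nbcoef r n * harm r n)) y / (1 - y)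
                    - INR 2 * - / (1 - y) * ln (1 - y) ^ 1).
    + apply (is_derive_minus (fun y => Rpower (1 - y) r * E y) (fun y => ln (1 - y) ^ 2)).
      * apply is_derive_Rpower_PSeries; [|lra| |apply CV_radius_nbcoef_harm; auto; lra].
        -- intros n. rewrite nbcoef_S. rewrite harm_S.
           rewrite harm2_S.
           rewrite S_INR. pose proof (pos_INR n). field. lra.
        -- apply (CV_radius_dominated _ (r + 2) ((r + 1) / r)); [lra| |apply Rabs_def1; lra].
           intros n. now apply nbcoef_harm_sq_le.
      * apply (is_derive_pow (fun y => ln (1 - y))), is_derive_ln_1m. lra.
    + rewrite H2G, Rmult_comm, Rmult_assoc, (Rmult_comm _ (Rpower _ _)), PSeries_nbcoef_harm by auto.
      simpl. field. lra.
Qed.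

Definition poly_bounded (h : nat -> R) : Prop :=
  exists K k, forall n, Rabs (h n) <= K * (1 + INR n) ^ k.

Lemma poly_bounded_const c : poly_bounded (fun _ => c).
Proof. exists (Rabs c), 0%nat. intros; simpl; lra. Qed.

Lemma poly_bounded_INR : poly_bounded INR.
Proof. exists 1, 1%nat. intros n. rewrite Rabs_pos_eq by apply pos_INR. simpl; lra. Qed.

Lemma poly_bounded_mult f g :
  poly_bounded f -> poly_bounded g -> poly_bounded (fun n => f n * g n).
Proof.
  intros [K1 [k1 H1]] [K2 [k2 H2]]. exists (K1 * K2), (k1 + k2)%nat. intros n.
  rewrite Rabs_mult, pow_add.
  replace (K1 * K2 * ((1 + INR n) ^ k1 * (1 + INR n) ^ k2))
    with ((K1 * (1 + INR n) ^ k1) * (K2 * (1 + INR n) ^ k2)) by ring.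
  apply Rmult_le_compat; auto; apply Rabs_pos.
Qed.

Lemma poly_bounded_plus f g :
  poly_bounded f -> poly_bounded g -> poly_bounded (fun n => f n + g n).
Proof.
  intros [K1 [k1 H1]] [K2 [k2 H2]]. exists (Rabs K1 + Rabs K2), (max k1 k2). intros n.
  assert (Hmono : forall k, (k <= max k1 k2)%nat -> forall K, K * (1 + INR n) ^ k
                    <= Rabs K * (1 + INR n) ^ max k1 k2).
  { intros k Hk K. pose proof (pos_INR n).
    apply Rle_trans with (Rabs K * (1 + INR n) ^ k).
    - apply Rmult_le_compat_r; [apply pow_le; lra|apply Rle_abs].
    - apply Rmult_le_compat_l; [apply Rabs_pos|apply Rle_pow; [lra|auto]]. }
  eapply Rle_trans; [apply Rabs_triang|].
  specialize (H1 n); specialize (H2 n).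
  specialize (Hmono k1 (Nat.le_max_l _ _) K1) as M1. specialize (Hmono k2 (Nat.le_max_r _ _) K2) as M2.
  lra.
Qed.

Lemma poly_bounded_opp f : poly_bounded f -> poly_bounded (fun n => - f n).
Proof. intros [K [k H]]. exists K, k. intros n. rewrite Rabs_Ropp. auto. Qed.

Lemma poly_bounded_minus f g :
  poly_bounded f -> poly_bounded g -> poly_bounded (fun n => f n - g n).
Proof. intros. now apply poly_bounded_plus, poly_bounded_opp. Qed.

Lemma poly_bounded_pow f k : poly_bounded f -> poly_bounded (fun n => f n ^ k).
Proof.
  intros H. induction k as [|k IH]; simpl.
  - apply poly_bounded_const.
  - now apply poly_bounded_mult.
Qed.

Lemma poly_bounded_div f c : poly_bounded f -> poly_bounded (fun n => f n / c).
Proof. intros H. apply poly_bounded_mult; [exact H|apply poly_bounded_const]. Qed.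

Ltac poly_bounded :=
  repeat first [ solve [auto] | apply poly_bounded_plus | apply poly_bounded_minus
               | apply poly_bounded_mult | apply poly_bounded_opp | apply poly_bounded_div
               | apply poly_bounded_pow | apply poly_bounded_INR | apply poly_bounded_const ].

Lemma poly_bounded_harm r : 0 < r -> poly_bounded (harm r).
Proof.
  intros Hr. exists (/ r), 1%nat. intros n. destruct (harm_bounds r n Hr).
  rewrite Rabs_pos_eq, pow_1 by lra. pose proof (Rinv_0_lt_compat r Hr). unfold Rdiv in *. nra.
Qed.

Lemma poly_bounded_harm2 r : 0 < r -> poly_bounded (harm2 r).
Proof.
  intros Hr. exists (/ r ^ 2), 1%nat. intros n. destruct (harm2_bounds r n Hr).
  rewrite Rabs_pos_eq by lra. assert (0 < / r ^ 2) by (apply Rinv_0_lt_compat, pow_lt; lra).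
  rewrite pow_1. unfold Rdiv in *. nra.
Qed.

(** * The negative binomial law with shape [r] and success probability [q] *)

Definition nb_law (r q : R) (n : nat) : R := nbcoef r n * q ^ n * Rpower (1 - q) r.

Definition nb_expect (r q : R) (h : nat -> R) : R := Series (fun n => nb_law r q n * h n).

Lemma pow_le_rising x k : 0 <= x -> x ^ k <= rising x k.
Proof.
  intros Hx. induction k as [|k IH]; simpl; [lra|]. pose proof (pos_INR k).
  rewrite Rmult_comm. apply Rmult_le_compat; try lra. apply pow_le; lra.
Qed.

Lemma pow_succ_le_rising r n k : 0 < r ->
  (1 + INR n) ^ k <= (1 + / r) ^ k * rising (r + INR n) k.
Proof.
  intros Hr. pose proof (pos_INR n). pose proof (Rinv_0_lt_compat r Hr).
  apply Rle_trans with (((1 + / r) * (r + INR n)) ^ k).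
  - apply pow_incr. split; [lra|].
    replace ((1 + / r) * (r + INR n)) with (r + INR n + 1 + INR n / r) by (field; lra).
    assert (0 <= INR n / r) by (apply Rdiv_le_0_compat; lra). lra.
  - rewrite Rpow_mult_distr. apply Rmult_le_compat_l; [apply pow_le; lra|].
    apply pow_le_rising; lra.
Qed.

Section NegativeBinomial.

Variables r q : R.
Hypothesis r_pos : 0 < r.
Hypothesis q_range : 0 <= q < 1.

Lemma nb_law_nonneg n : 0 <= nb_law r q n.
Proof.
  unfold nb_law, Rpower. pose proof (nbcoef_pos r n r_pos). pose proof (exp_pos (r * ln (1 - q))).
  pose proof (pow_le q n (proj1 q_range)). apply Rmult_le_pos; [apply Rmult_le_pos|]; lra.
Qed.

(* A polynomial weight [(1 + n)^k] is absorbed by raising the shape from [r] to [r + k]. *)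
Lemma ex_series_nb_law h : poly_bounded h -> ex_series (fun n => nb_law r q n * h n).
Proof.
  intros [K [k Hb]].
  set (M := K * (1 + / r) ^ k * rising r k * Rpower (1 - q) r).
  apply (ex_series_Rle _ (fun n => M * (nbcoef (r + INR k) n * q ^ n))).
  - intros n. pose proof (pos_INR n).
    rewrite Rabs_mult, (Rabs_pos_eq (nb_law r q n)) by apply nb_law_nonneg.
    assert (HK : 0 <= K).
    { specialize (Hb n). pose proof (Rabs_pos (h n)).
      assert (0 < (1 + INR n) ^ k) by (apply pow_lt; lra). nra. }
    apply Rle_trans with (nb_law r q n * (K * ((1 + / r) ^ k * rising (r + INR n) k))).
    + apply Rmult_le_compat_l; [apply nb_law_nonneg|].
      eapply Rle_trans; [apply Hb|]. apply Rmult_le_compat_l; [auto|now apply pow_succ_le_rising].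
    + right. unfold M, nb_law.
      replace (nbcoef r n * q ^ n * Rpower (1 - q) r * (K * ((1 + / r) ^ k * rising (r + INR n) k)))
        with (K * (1 + / r) ^ k * Rpower (1 - q) r * q ^ n * (nbcoef r n * rising (r + INR n) k))
        by ring.
      rewrite nbcoef_shift. ring.
  - apply ex_series_Rscal, ex_series_Rabs, ex_series_nbcoef; [pose proof (pos_INR k); lra|].
    apply Rabs_def1; lra.
Qed.

Lemma nb_expect_ext f g : (forall n, f n = g n) -> nb_expect r q f = nb_expect r q g.
Proof. intros E. unfold nb_expect. apply Series_ext. intros n. now rewrite E. Qed.

Lemma nb_expect_scal c f : nb_expect r q (fun n => c * f n) = c * nb_expect r q f.
Proof. unfold nb_expect. rewrite <- Series_scal_l. apply Series_ext. intros; ring. Qed.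

Lemma nb_expect_plus f g : poly_bounded f -> poly_bounded g ->
  nb_expect r q (fun n => f n + g n) = nb_expect r q f + nb_expect r q g.
Proof.
  intros Hf Hg. unfold nb_expect.
  rewrite <- Series_plus by now apply ex_series_nb_law. apply Series_ext. intros; ring.
Qed.

Lemma nb_expect_PSeries h :
  nb_expect r q h = Rpower (1 - q) r * PSeries (fun n => nbcoef r n * h n) q.
Proof. unfold nb_expect, nb_law, PSeries. rewrite <- Series_scal_l. apply Series_ext. intros; ring. Qed.

Lemma nb_expect_const c : nb_expect r q (fun _ => c) = c.
Proof.
  rewrite nb_expect_PSeries.
  replace (PSeries (fun n => nbcoef r n * c) q) with (c * PSeries (nbcoef r) q)
    by (unfold PSeries; rewrite <- Series_scal_l; apply Series_ext; intros; ring).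
  replace (Rpower (1 - q) r * (c * PSeries (nbcoef r) q))
    with (c * (Rpower (1 - q) r * PSeries (nbcoef r) q)) by ring.
  rewrite PSeries_nbcoef by (auto; lra). ring.
Qed.

Lemma nb_expect_stein h : poly_bounded h ->
  nb_expect r q (fun n => INR n * h n) = q * nb_expect r q (fun n => (r + INR n) * h (S n)).
Proof.
  intros Hh. unfold nb_expect.
  rewrite Series_incr_1 by (apply ex_series_nb_law; poly_bounded).
  replace (nb_law r q 0 * (INR 0 * h 0%nat)) with 0 by (simpl; ring).
  rewrite Rplus_0_l, <- Series_scal_l.
  apply Series_ext. intros n. unfold nb_law. rewrite nbcoef_S, S_INR.
  pose proof (pos_INR n). simpl. field. lra.
Qed.

Definition nb_moment (k : nat) : R := nb_expect r q (fun n => INR n ^ k).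

Lemma nb_expect_poly h c0 c1 c2 c3 c4 :
  (forall n, h n = c0 + c1 * INR n + c2 * INR n ^ 2 + c3 * INR n ^ 3 + c4 * INR n ^ 4) ->
  nb_expect r q h = c0 + c1 * nb_moment 1 + c2 * nb_moment 2 + c3 * nb_moment 3 + c4 * nb_moment 4.
Proof.
  intros Hh. rewrite (nb_expect_ext _ _ Hh).
  rewrite !nb_expect_plus by poly_bounded. rewrite nb_expect_const, !nb_expect_scal.
  unfold nb_moment. rewrite (nb_expect_ext (fun n => INR n ^ 1) INR) by (intros; ring).
  reflexivity.
Qed.

Lemma nb_expect_harm2_tails :
  Series (fun j => / (r + INR j) ^ 2 * Series (fun n => nb_law r q (n + S j)%nat))
  = nb_expect r q (harm2 r).
Proof.
  apply (Series_weighted_tails _ _ (/ r ^ 2)).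
  - apply nb_law_nonneg.
  - intros j. apply Rlt_le, Rinv_0_lt_compat, pow_lt. pose proof (pos_INR j); lra.
  - intros J. destruct (harm2_bounds r J r_pos) as [_ Hb].
    unfold Rdiv in Hb. rewrite Rmult_comm. exact Hb.
  - apply (ex_series_ext (fun n => nb_law r q n * 1)); [intros; apply Rmult_1_r|].
    apply ex_series_nb_law, poly_bounded_const.
  - apply ex_series_nb_law, poly_bounded_INR.
  - apply ex_series_nb_law, poly_bounded_harm2, r_pos.
Qed.

End NegativeBinomial.

(** * NB(λ, α) in the mean parametrisation *)

Definition nb_prob (a l : R) : R := a * l / (1 + a * l).

Lemma nb_prob_range a l : 0 < a -> 0 < l -> 0 <= nb_prob a l < 1.
Proof.
  intros Ha Hl. unfold nb_prob. assert (0 < a * l) by nra. split.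
  - apply Rlt_le, Rdiv_lt_0_compat; lra.
  - apply Rmult_lt_reg_r with (1 + a * l); [lra|]. unfold Rdiv. rewrite Rmult_assoc, Rinv_l; lra.
Qed.

Lemma nb_pmf_eq_nb_law l a n : 0 < a -> 0 < l -> nb_pmf l a n = nb_law (/ a) (nb_prob a l) n.
Proof.
  intros Ha Hl. unfold nb_pmf, nb_law, nbcoef, nb_prob.
  replace (1 - a * l / (1 + a * l)) with (/ (1 + a * l)) by (field; nra). ring.
Qed.

Definition resid (a l : R) (n : nat) : R := (INR n - l) / (1 + a * l).

Definition vterm (a l : R) (n : nat) : R :=
  (INR n * (1 + a * l) ^ 2 - a ^ 2 * INR n * l ^ 2 - a * l ^ 2) / (1 + a * l) ^ 2.

Definition gterm (a l : R) (n : nat) : R := resid a l n ^ 2 - vterm a l n.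

Definition alpha_score (a l : R) (n : nat) : R :=
  / a ^ 2 * (ln (1 + a * l) - harm (/ a) n) + (INR n - l) / (a * (1 + a * l)).

Lemma poly_bounded_resid a l : poly_bounded (resid a l).
Proof. unfold resid. poly_bounded. Qed.

Lemma poly_bounded_alpha_score a l : 0 < a -> poly_bounded (alpha_score a l).
Proof.
  intros Ha. assert (Hb := poly_bounded_harm (/ a) (Rinv_0_lt_compat a Ha)).
  unfold alpha_score. poly_bounded.
Qed.

Section MeanParametrisation.

Variables a l : R.
Hypothesis a_pos : 0 < a.
Hypothesis l_pos : 0 < l.

Local Notation E := (nb_expect (/ a) (nb_prob a l)).
Local Notation m := (nb_moment (/ a) (nb_prob a l)).
Local Notation H := (harm (/ a)).
Local Notation c := (1 + a * l).
Local Notation L := (ln (1 + a * l)).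

Let r_pos : 0 < / a.
Proof. now apply Rinv_0_lt_compat. Qed.
Let q_range : 0 <= nb_prob a l < 1.
Proof. now apply nb_prob_range. Qed.
Let c_pos : 0 < c.
Proof. nra. Qed.
Let H_bounded : poly_bounded H.
Proof. now apply poly_bounded_harm. Qed.
Let H2_bounded : poly_bounded (harm2 (/ a)).
Proof. now apply poly_bounded_harm2. Qed.

Lemma nb_stein h : poly_bounded h ->
  c * E (fun n => INR n * h n) = l * E (fun n => (1 + a * INR n) * h (S n)).
Proof.
  intros Hh. rewrite nb_expect_stein by auto.
  rewrite (nb_expect_ext _ _ (fun n => (1 + a * INR n) * h (S n))
                             (fun n => a * ((/ a + INR n) * h (S n)))) by (intros; field; lra).
  rewrite nb_expect_scal. unfold nb_prob. field. lra.
Qed.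

Lemma nb_moment_S k :
  m (S k) = l * E (fun n => (1 + a * INR n) * (INR n + 1) ^ k - a * INR n ^ S k).
Proof.
  assert (Hs := nb_stein (fun n => INR n ^ k) ltac:(poly_bounded)). cbv beta in Hs.
  change (E (fun n => INR n * INR n ^ k)) with (m (S k)) in Hs.
  rewrite (nb_expect_ext _ _ _ (fun n => ((1 + a * INR n) * (INR n + 1) ^ k - a * INR n ^ S k)
                                         + a * INR n ^ S k)) in Hs
    by (intros; rewrite S_INR; ring).
  rewrite nb_expect_plus, nb_expect_scal in Hs by poly_bounded.
  change (E (fun n => INR n ^ S k)) with (m (S k)) in Hs. lra.
Qed.

Lemma nb_moments :
  m 1 = l /\ m 2 = l + (1 + a) * l ^ 2
  /\ m 3 = l + 3 * (1 + a) * l ^ 2 + (1 + a) * (1 + 2 * a) * l ^ 3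
  /\ m 4 = l + 7 * (1 + a) * l ^ 2 + 6 * (1 + a) * (1 + 2 * a) * l ^ 3
           + (1 + a) * (1 + 2 * a) * (1 + 3 * a) * l ^ 4.
Proof.
  assert (M1 : m 1 = l).
  { rewrite nb_moment_S, (nb_expect_poly _ _ r_pos q_range _ 1 0 0 0 0) by (intros; simpl; ring).
    ring. }
  assert (M2 : m 2 = l + (1 + a) * l ^ 2).
  { rewrite nb_moment_S, (nb_expect_poly _ _ r_pos q_range _ 1 (1 + a) 0 0 0) by (intros; simpl; ring).
    rewrite M1. ring. }
  assert (M3 : m 3 = l + 3 * (1 + a) * l ^ 2 + (1 + a) * (1 + 2 * a) * l ^ 3).
  { rewrite nb_moment_S, (nb_expect_poly _ _ r_pos q_range _ 1 (2 + a) (1 + 2 * a) 0 0)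
      by (intros; simpl; ring).
    rewrite M1, M2. ring. }
  repeat split; auto.
  rewrite nb_moment_S, (nb_expect_poly _ _ r_pos q_range _ 1 (3 + a) (3 + 3 * a) (1 + 3 * a) 0)
    by (intros; simpl; ring).
  rewrite M1, M2, M3. ring.
Qed.

Lemma nb_expect_INR : E INR = l.
Proof.
  destruct nb_moments as [M1 _]. rewrite <- M1 at 2. unfold nb_moment.
  apply nb_expect_ext. intros; ring.
Qed.

Lemma ln_one_minus_nb_prob : ln (1 - nb_prob a l) = - L.
Proof.
  unfold nb_prob. replace (1 - a * l / c) with (/ c) by (field; lra).
  apply ln_Rinv. lra.
Qed.

Lemma nb_expect_harm : E H = L.
Proof.
  rewrite nb_expect_PSeries, PSeries_nbcoef_harm by (auto; lra).
  rewrite ln_one_minus_nb_prob. ring.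
Qed.

Lemma nb_expect_harm_sq : E (fun n => H n ^ 2 - harm2 (/ a) n) = L ^ 2.
Proof.
  rewrite nb_expect_PSeries, PSeries_nbcoef_harm_sq by (auto; lra).
  rewrite ln_one_minus_nb_prob. ring.
Qed.

Lemma harm_S_mul n : (1 + a * INR n) * H (S n) = (1 + a * INR n) * H n + a.
Proof.
  rewrite harm_S. pose proof (pos_INR n).
  assert (0 <= INR n * a) by (apply Rmult_le_pos; lra).
  field. lra.
Qed.

Lemma nb_expect_INR_harm : E (fun n => INR n * H n) = l * L + a * l.
Proof.
  assert (Hs := nb_stein H H_bounded).
  rewrite (nb_expect_ext _ _ (fun n => (1 + a * INR n) * H (S n))
                             (fun n => a * (INR n * H n) + H n + a)) in Hs
    by (intros; rewrite harm_S_mul; ring).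
  rewrite !nb_expect_plus, nb_expect_scal, nb_expect_const, nb_expect_harm in Hs by poly_bounded.
  lra.
Qed.

Lemma nb_expect_INR2_harm :
  E (fun n => INR n ^ 2 * H n) = l * (1 + a) * (l * L + a * l) + l * L + a * l * (l + 1).
Proof.
  assert (Hs := nb_stein (fun n => INR n * H n) ltac:(poly_bounded)). cbv beta in Hs.
  rewrite (nb_expect_ext _ _ (fun n => INR n * (INR n * H n)) (fun n => INR n ^ 2 * H n)) in Hs
    by (intros; ring).
  rewrite (nb_expect_ext _ _ (fun n => (1 + a * INR n) * (INR (S n) * H (S n)))
                             (fun n => a * (INR n ^ 2 * H n) + (1 + a) * (INR n * H n) + H n
                                         + (a * INR n + a))) in Hs
    by (intros n; rewrite S_INR;
        transitivity ((INR n + 1) * ((1 + a * INR n) * H (S n))); [ring|];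
        rewrite harm_S_mul; ring).
  rewrite !nb_expect_plus, !nb_expect_scal, nb_expect_INR_harm, nb_expect_harm in Hs by poly_bounded.
  rewrite nb_expect_const, nb_expect_INR in Hs by auto. lra.
Qed.

Ltac nb_poly_expect c0 c1 c2 c3 c4 :=
  rewrite (nb_expect_poly _ _ r_pos q_range _ c0 c1 c2 c3 c4)
    by (intros; unfold gterm, resid, vterm; field; lra);
  destruct nb_moments as [M1 [M2 [M3 M4]]]; rewrite M1, M2, M3, M4; field; lra.

Local Notation beta := (- (1 + 2 * l + 2 * a * l)).
Local Notation gamma := (l ^ 2 * (1 + a)).

Lemma nb_expect_resid : E (resid a l) = 0.
Proof. nb_poly_expect (- l / c) (1 / c) 0 0 0. Qed.

Lemma nb_expect_resid_sq : E (fun n => resid a l n ^ 2) = l * c / c ^ 2.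
Proof. nb_poly_expect (l ^ 2 / c ^ 2) (- 2 * l / c ^ 2) (1 / c ^ 2) 0 0. Qed.

Lemma gterm_poly n : gterm a l n = (INR n ^ 2 + beta * INR n + gamma) / c ^ 2.
Proof. unfold gterm, resid, vterm. field. lra. Qed.

Lemma nb_expect_gterm : E (gterm a l) = 0.
Proof. nb_poly_expect (gamma / c ^ 2) (beta / c ^ 2) (1 / c ^ 2) 0 0. Qed.

Lemma nb_expect_resid_gterm : E (fun n => resid a l n * gterm a l n) = 0.
Proof.
  nb_poly_expect (- l * gamma / c ^ 3) ((gamma - l * beta) / c ^ 3) ((beta - l) / c ^ 3) (1 / c ^ 3) 0.
Qed.

Lemma nb_expect_gterm_sq : E (fun n => gterm a l n ^ 2) = 2 * l ^ 2 * (1 + a) / c ^ 2.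
Proof.
  nb_poly_expect (gamma ^ 2 / c ^ 4) (2 * beta * gamma / c ^ 4) ((beta ^ 2 + 2 * gamma) / c ^ 4)
                 (2 * beta / c ^ 4) (1 / c ^ 4).
Qed.

Lemma nb_expect_alpha_score : E (alpha_score a l) = 0.
Proof.
  rewrite (nb_expect_ext _ _ _ (fun n => L / a ^ 2 + (- / a ^ 2) * H n + / a * resid a l n))
    by (intros; unfold alpha_score, resid; field; lra).
  rewrite !nb_expect_plus, nb_expect_const, !nb_expect_scal, nb_expect_harm, nb_expect_resid
    by poly_bounded.
  field. lra.
Qed.

Lemma nb_expect_gterm_alpha_score :
  E (fun n => gterm a l n * alpha_score a l n) = l ^ 2 / c ^ 2.
Proof.
  rewrite (nb_expect_ext _ _ _ (fun n => L / a ^ 2 * gterm a l n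
      + (- / (a ^ 2 * c ^ 2)) * (INR n ^ 2 * H n) + (- beta / (a ^ 2 * c ^ 2)) * (INR n * H n)
      + (- gamma / (a ^ 2 * c ^ 2)) * H n + / a * (resid a l n * gterm a l n)))
    by (intros; rewrite gterm_poly; unfold alpha_score, resid; field; lra).
  rewrite !nb_expect_plus, !nb_expect_scal by poly_bounded.
  rewrite nb_expect_gterm, nb_expect_INR2_harm, nb_expect_INR_harm, nb_expect_harm,
    nb_expect_resid_gterm.
  field. lra.
Qed.

Lemma nb_expect_alpha_score_sq :
  E (fun n => alpha_score a l n ^ 2) = / a ^ 4 * (E (harm2 (/ a)) - a * l / (l + / a)).
Proof.
  rewrite (nb_expect_ext _ _ _ (fun n => (L ^ 2 / a ^ 4 - 2 * L * l / (a ^ 3 * c))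
      + (- 2 * L / a ^ 4 + 2 * l / (a ^ 3 * c)) * H n + / a ^ 4 * (H n ^ 2 - harm2 (/ a) n)
      + / a ^ 4 * harm2 (/ a) n + 2 * L / (a ^ 3 * c) * INR n
      + (- 2 / (a ^ 3 * c)) * (INR n * H n) + / a ^ 2 * resid a l n ^ 2))
    by (intros; unfold alpha_score, resid; field; lra).
  rewrite !nb_expect_plus, nb_expect_const, !nb_expect_scal by poly_bounded.
  rewrite nb_expect_harm, nb_expect_harm_sq, nb_expect_INR, nb_expect_INR_harm, nb_expect_resid_sq.
  field. split; [|lra]. assert (0 < l + / a) by lra. lra.
Qed.

End MeanParametrisation.

(** * Expectations over independent coordinates *)

Definition coord_expect (pm : nat -> nat -> R) (t : nat) (phi : nat -> R) : R :=
  Series (fun n => pm t n * phi n).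

Lemma coord_expect_scal pm t c phi : coord_expect pm t (fun n => c * phi n) = c * coord_expect pm t phi.
Proof. unfold coord_expect. rewrite <- Series_scal_l. apply Series_ext. intros; ring. Qed.

Lemma Eiter_ext pm k f g e : (forall e', f e' = g e') -> Eiter pm k f e = Eiter pm k g e.
Proof.
  intros Hfg. revert e; induction k as [|k IH]; intros e; simpl; [apply Hfg|].
  apply Series_ext. intros n. now rewrite IH.
Qed.

Lemma Eiter_scal pm k c f e : Eiter pm k (fun e => c * f e) e = c * Eiter pm k f e.
Proof.
  revert e; induction k as [|k IH]; intros e; simpl; [reflexivity|].
  rewrite <- Series_scal_l. apply Series_ext. intros n. rewrite IH. ring.
Qed.

Lemma Eiter_const_one pm k e :
  (forall t, coord_expect pm t (fun _ => 1) = 1) -> Eiter pm k (fun _ => 1) e = 1.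
Proof.
  intros Hmass. revert e; induction k as [|k IH]; intros e; simpl; [reflexivity|].
  transitivity (coord_expect pm k (fun _ => 1)); [|apply Hmass].
  apply Series_ext. intros n. now rewrite IH.
Qed.

Definition depends_below (k : nat) (f : (nat -> nat) -> R) : Prop :=
  forall e e', (forall j, (j < k)%nat -> e j = e' j) -> f e = f e'.

Lemma Eiter_depends_below pm m f : depends_below m f ->
  forall k e e', (forall j, (k <= j < m)%nat -> e j = e' j) -> Eiter pm k f e = Eiter pm k f e'.
Proof.
  intros Hf k. induction k as [|k IH]; intros e e' Hee'; simpl.
  - apply Hf. intros j Hj. apply Hee'. lia.
  - apply Series_ext. intros n. f_equal. apply IH. intros j Hj. unfold upd.
    destruct (Nat.eqb_spec j k); [reflexivity|]. apply Hee'. lia.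
Qed.

Lemma Eiter_pull pm k (h f : (nat -> nat) -> R) e :
  (forall e' j n, (j < k)%nat -> h (upd e' j n) = h e') ->
  Eiter pm k (fun e => h e * f e) e = h e * Eiter pm k f e.
Proof.
  intros Hh. revert e; induction k as [|k IH]; intros e; simpl; [reflexivity|].
  rewrite <- Series_scal_l. apply Series_ext. intros n.
  rewrite IH by (intros; apply Hh; lia). rewrite Hh by lia. ring.
Qed.

Lemma Eiter_S_product pm m (A : (nat -> nat) -> R) (phi : nat -> R) e : depends_below m A ->
  Eiter pm (S m) (fun e => A e * phi (e m)) e
  = Eiter pm m A (fun _ => O) * coord_expect pm m phi.
Proof.
  intros HA. simpl. unfold coord_expect. rewrite <- Series_scal_l. apply Series_ext. intros n.
  rewrite (Eiter_ext _ _ _ (fun e => phi (e m) * A e)) by (intros; ring).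
  rewrite Eiter_pull by (intros e' j k Hj; unfold upd; destruct (Nat.eqb_spec m j); [lia|reflexivity]).
  unfold upd at 1. rewrite Nat.eqb_refl.
  rewrite (Eiter_depends_below pm m A HA m (upd e m n) (fun _ => O)) by lia. ring.
Qed.

Fixpoint iter_summable (pm : nat -> nat -> R) (k : nat) (f : (nat -> nat) -> R) : Prop :=
  match k with
  | O => True
  | S j => iter_summable pm j f /\ forall e, ex_series (fun n => pm j n * Eiter pm j f (upd e j n))
  end.

Lemma Eiter_plus pm k f g e : iter_summable pm k f -> iter_summable pm k g ->
  Eiter pm k (fun e => f e + g e) e = Eiter pm k f e + Eiter pm k g e.
Proof.
  revert e; induction k as [|k IH]; intros e Hf Hg; simpl; [reflexivity|].
  destruct Hf as [Hf1 Hf2], Hg as [Hg1 Hg2].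
  rewrite <- Series_plus by auto. apply Series_ext. intros n. rewrite IH by auto. ring.
Qed.

Definition moments_finite (pm : nat -> nat -> R) : Prop :=
  (forall t n, 0 <= pm t n) /\ (forall t d, ex_series (fun n => pm t n * (1 + INR n) ^ d)).

Fixpoint weight (i k : nat) (e : nat -> nat) : R :=
  match k with
  | O => 1
  | S j => weight i j e * (if (i <=? j)%nat then 1 + INR (e j) else 1)
  end.

Lemma weight_S0 m e : weight 0 (S m) e = weight 0 m e * (1 + INR (e m)).
Proof. reflexivity. Qed.

Lemma weight_ge_1 i k e : 1 <= weight i k e.
Proof.
  induction k as [|k IH]; simpl; [lra|].
  destruct (i <=? k)%nat; [pose proof (pos_INR (e k)); nra|lra].
Qed.

Lemma weight_empty i k e : (k <= i)%nat -> weight i k e = 1.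
Proof.
  induction k as [|k IH]; intros Hk; simpl; [reflexivity|].
  rewrite IH by lia. destruct (Nat.leb_spec i k); [lia|ring].
Qed.

Lemma weight_upd i k e n : (i < k)%nat -> weight i k (upd e i n) = (1 + INR n) * weight (S i) k e.
Proof.
  induction k as [|k IH]; intros Hik; [lia|]. cbn [weight].
  destruct (Nat.eq_dec k i) as [->|Hki].
  - rewrite !weight_empty by lia. rewrite Nat.leb_refl.
    destruct (Nat.leb_spec (S i) i); [lia|]. unfold upd. rewrite Nat.eqb_refl. ring.
  - rewrite IH by lia. destruct (Nat.leb_spec i k); [|lia]. destruct (Nat.leb_spec (S i) k); [|lia].
    unfold upd. destruct (Nat.eqb_spec k i); [lia|ring].
Qed.

Definition dominated (k : nat) (f : (nat -> nat) -> R) : Prop :=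
  exists K d, 0 <= K /\ forall e, Rabs (f e) <= K * weight 0 k e ^ d.

Fixpoint moment_prod (pm : nat -> nat -> R) (d k : nat) : R :=
  match k with
  | O => 1
  | S j => moment_prod pm d j * Series (fun n => pm j n * (1 + INR n) ^ d)
  end.

(* Integrating out coordinate [m] trades the weight [1 + e m] for the [d]-th moment of [pm m]. *)
Lemma Eiter_bounded pm d k f K : moments_finite pm -> 0 <= K ->
  (forall e, Rabs (f e) <= K * weight 0 k e ^ d) ->
  forall m, (m <= k)%nat ->
  iter_summable pm m f /\ forall e, Rabs (Eiter pm m f e) <= K * moment_prod pm d m * weight m k e ^ d.
Proof.
  intros Hpm HK Hf. pose proof Hpm as [Hp Hs].
  induction m as [|m IH]; intros Hm; [split; [exact I|intros e; simpl; rewrite Rmult_1_r; auto]|].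
  destruct IH as [Hsum Hbound]; [lia|].
  set (B := fun e => K * moment_prod pm d m * weight (S m) k e ^ d).
  assert (Hterm : forall e n,
            Rabs (pm m n * Eiter pm m f (upd e m n)) <= B e * (pm m n * (1 + INR n) ^ d)).
  { intros e n. rewrite Rabs_mult, (Rabs_pos_eq (pm m n)) by auto.
    apply Rle_trans with (pm m n * (K * moment_prod pm d m * weight m k (upd e m n) ^ d)).
    - apply Rmult_le_compat_l; auto.
    - unfold B. rewrite weight_upd, Rpow_mult_distr by lia. right; ring. }
  assert (Habs : forall e, ex_series (fun n => Rabs (pm m n * Eiter pm m f (upd e m n)))).
  { intros e. apply (ex_series_Rle _ (fun n => B e * (pm m n * (1 + INR n) ^ d))).
    - intros n. rewrite Rabs_Rabsolu. apply Hterm.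
    - apply ex_series_Rscal, Hs. }
  split; [split; auto; intros e; now apply ex_series_Rabs|].
  intros e. simpl Eiter.
  eapply Rle_trans; [apply Series_Rabs, Habs|].
  eapply Rle_trans; [apply Series_le; [|apply (ex_series_Rscal (B e)), Hs]|].
  - intros n. split; [apply Rabs_pos|apply Hterm].
  - rewrite Series_scal_l. unfold B. simpl moment_prod. right; ring.
Qed.

Lemma iter_summable_dominated pm k f : moments_finite pm -> dominated k f -> iter_summable pm k f.
Proof. intros Hpm [K [d [HK Hf]]]. apply (Eiter_bounded pm d k f K Hpm HK Hf k). lia. Qed.

Definition regular (k : nat) (f : (nat -> nat) -> R) : Prop := dominated k f /\ depends_below k f.

Lemma dominated_zero m : dominated m (fun _ => 0).
Proof. exists 0, 0%nat. split; [lra|]. intros; simpl. rewrite Rabs_R0. lra. Qed.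

Lemma dominated_S m f : dominated m f -> dominated (S m) f.
Proof.
  intros [K [d [HK Hf]]]. exists K, d. split; auto. intros e. eapply Rle_trans; [apply Hf|].
  apply Rmult_le_compat_l; auto. apply pow_incr. pose proof (weight_ge_1 0 m e).
  rewrite weight_S0. pose proof (pos_INR (e m)). split; nra.
Qed.

Lemma dominated_plus m f g : dominated m f -> dominated m g -> dominated m (fun e => f e + g e).
Proof.
  intros [K1 [d1 [HK1 H1]]] [K2 [d2 [HK2 H2]]]. exists (K1 + K2), (d1 + d2)%nat. split; [lra|].
  intros e. pose proof (weight_ge_1 0 m e) as HW.
  assert (M1 : K1 * weight 0 m e ^ d1 <= K1 * weight 0 m e ^ (d1 + d2))
    by (apply Rmult_le_compat_l; [lra|apply Rle_pow; [lra|lia]]).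
  assert (M2 : K2 * weight 0 m e ^ d2 <= K2 * weight 0 m e ^ (d1 + d2))
    by (apply Rmult_le_compat_l; [lra|apply Rle_pow; [lra|lia]]).
  eapply Rle_trans; [apply Rabs_triang|]. specialize (H1 e); specialize (H2 e). lra.
Qed.

Lemma dominated_mult m f g : dominated m f -> dominated m g -> dominated m (fun e => f e * g e).
Proof.
  intros [K1 [d1 [HK1 H1]]] [K2 [d2 [HK2 H2]]]. exists (K1 * K2), (d1 + d2)%nat.
  split; [now apply Rmult_le_pos|]. intros e. rewrite Rabs_mult, pow_add.
  replace (K1 * K2 * (weight 0 m e ^ d1 * weight 0 m e ^ d2))
    with ((K1 * weight 0 m e ^ d1) * (K2 * weight 0 m e ^ d2)) by ring.
  apply Rmult_le_compat; auto; apply Rabs_pos.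
Qed.

Lemma dominated_last m phi : poly_bounded phi -> dominated (S m) (fun e => phi (e m)).
Proof.
  intros [K [d Hphi]].
  assert (HK : 0 <= K) by (specialize (Hphi O); pose proof (Rabs_pos (phi O)); simpl in Hphi;
                           rewrite Rplus_0_r, pow1 in Hphi; lra).
  exists K, d. split; auto. intros e. eapply Rle_trans; [apply Hphi|].
  apply Rmult_le_compat_l; auto. apply pow_incr. rewrite weight_S0.
  pose proof (weight_ge_1 0 m e). pose proof (pos_INR (e m)). split; nra.
Qed.

Lemma dominated_last_product m A phi :
  dominated m A -> poly_bounded phi -> dominated (S m) (fun e => A e * phi (e m)).
Proof. intros HA Hphi. apply dominated_mult; [now apply dominated_S|now apply dominated_last]. Qed.

Lemma regular_ext m f g : (forall e, f e = g e) -> regular m f -> regular m g.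
Proof.
  intros Hfg [[K [d [HK Hf]]] Hdep]. split.
  - exists K, d. split; auto. intros e. rewrite <- Hfg. auto.
  - intros e e' Hee'. rewrite <- !Hfg. auto.
Qed.

Lemma regular_const m c : regular m (fun _ => c).
Proof.
  split; [|intros e e' _; reflexivity].
  exists (Rabs c), 0%nat. split; [apply Rabs_pos|]. intros; simpl; lra.
Qed.

Lemma regular_plus m f g : regular m f -> regular m g -> regular m (fun e => f e + g e).
Proof.
  intros [Df Ef] [Dg Eg]. split; [now apply dominated_plus|].
  intros e e' Hee'. now rewrite (Ef e e'), (Eg e e').
Qed.

Lemma regular_mult m f g : regular m f -> regular m g -> regular m (fun e => f e * g e).
Proof.
  intros [Df Ef] [Dg Eg]. split; [now apply dominated_mult|].
  intros e e' Hee'. now rewrite (Ef e e'), (Eg e e').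
Qed.

Lemma regular_minus m f g : regular m f -> regular m g -> regular m (fun e => f e - g e).
Proof.
  intros Hf Hg. apply (regular_ext m (fun e => f e + (-1) * g e)); [intros; ring|].
  apply regular_plus; [|apply regular_mult; [apply regular_const|]]; auto.
Qed.

Lemma regular_pow m f k : regular m f -> regular m (fun e => f e ^ k).
Proof.
  intros Hf. induction k as [|k IH]; simpl; [apply regular_const|now apply regular_mult].
Qed.

Lemma regular_sumT m (h : nat -> nat -> R) :
  (forall t, poly_bounded (h t)) -> regular m (fun e => sumT m (fun t => h t (e t))).
Proof.
  intros Hh. split.
  - induction m as [|m IH]; simpl; [apply dominated_zero|].
    apply dominated_plus; [now apply dominated_S|now apply dominated_last].
  - intros e e' Hee'. apply sumT_ext. intros t Ht. now rewrite Hee'.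
Qed.

(* [[(A_1, phi_1); ...; (A_k, phi_k)]] encodes the integrand [sum_i A_i e * phi_i (e m)]; when
   the [A_i] only see the coordinates below [m], coordinate [m] integrates out separately. *)
Definition last_split := list (((nat -> nat) -> R) * (nat -> R)).

Fixpoint split_sum (L : last_split) (m : nat) (e : nat -> nat) : R :=
  match L with nil => 0 | (A, phi) :: L' => A e * phi (e m) + split_sum L' m e end.

Fixpoint split_expect (pm : nat -> nat -> R) (m : nat) (L : last_split) : R :=
  match L with
  | nil => 0
  | (A, phi) :: L' => Eiter pm m A (fun _ => O) * coord_expect pm m phi + split_expect pm m L'
  end.

Fixpoint split_regular (m : nat) (L : last_split) : Prop :=
  match L with nil => True | (A, phi) :: L' => regular m A /\ poly_bounded phi /\ split_regular m L' end.

Lemma Eiter_split pm m F L e : moments_finite pm -> split_regular m L ->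
  (forall e, F e = split_sum L m e) -> Eiter pm (S m) F e = split_expect pm m L.
Proof.
  intros Hpm HL HF. rewrite (Eiter_ext _ _ _ _ _ HF). clear F HF.
  induction L as [|[A phi] L IH]; cbn [split_sum split_expect].
  - rewrite (Eiter_ext _ _ _ (fun e => 0 * 0)) by (intros; ring). rewrite Eiter_scal. ring.
  - destruct HL as [[DA EA] [Hphi HL]].
    assert (DL : dominated (S m) (fun e => split_sum L m e)).
    { clear IH. induction L as [|[A' phi'] L IHL]; cbn [split_sum]; [apply dominated_zero|].
      destruct HL as [[DA' _] [Hphi' HL]]. apply dominated_plus; auto.
      now apply dominated_last_product. }
    rewrite Eiter_plus, Eiter_S_product, IH; auto; apply iter_summable_dominated; auto.
    now apply dominated_last_product.
Qed.

Ltac regular :=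
  repeat (cbv beta; first [ solve [auto] | apply regular_minus | apply regular_plus
                          | apply regular_mult | apply regular_pow
                          | apply regular_const | apply regular_sumT; intros; poly_bounded ]).

Ltac split_regular :=
  cbn [split_regular]; repeat match goal with |- _ /\ _ => split end; try exact I; regular; poly_bounded.

Definition prob_family (pm : nat -> nat -> R) : Prop :=
  moments_finite pm /\ forall t, coord_expect pm t (fun _ => 1) = 1.

Section CenteredSums.

Variable pm : nat -> nat -> R.
Hypothesis pm_prob : prob_family pm.
Variable h : nat -> nat -> R.
Hypothesis h_bounded : forall t, poly_bounded (h t).
Hypothesis h_centered : forall t, coord_expect pm t (h t) = 0.

Local Notation S_ m := (fun e => sumT m (fun t => h t (e t))).

Lemma Eiter_centered_sum m : Eiter pm m (S_ m) (fun _ => O) = 0.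
Proof.
  destruct pm_prob as [Hpm Hmass]. induction m as [|m IH]; [reflexivity|].
  rewrite (Eiter_split pm m _ [(S_ m, fun _ => 1); (fun _ => 1, h m)]);
    [|exact Hpm|split_regular|intros e; simpl; ring].
  cbn [split_expect]. rewrite IH, Eiter_const_one by auto.
  rewrite h_centered. ring.
Qed.

Lemma Eiter_centered_sum_sq m :
  Eiter pm m (fun e => S_ m e ^ 2) (fun _ => O)
  = sumT m (fun t => coord_expect pm t (fun n => h t n ^ 2)).
Proof.
  destruct pm_prob as [Hpm Hmass]. induction m as [|m IH]; [simpl; ring|].
  rewrite (Eiter_split pm m _ [(fun e => S_ m e ^ 2, fun _ => 1); (S_ m, fun n => 2 * h m n);
                               (fun _ => 1, fun n => h m n ^ 2)]);
    [|exact Hpm|split_regular|intros e; simpl; ring].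
  cbn [split_expect]. rewrite IH, Eiter_centered_sum, Eiter_const_one by auto.
  rewrite coord_expect_scal, h_centered, Hmass. simpl. ring.
Qed.

End CenteredSums.

(** * Derivatives of the log-likelihood *)

Lemma is_derive_sumT (F : nat -> R -> R) (dF : nat -> R) y T :
  (forall t, is_derive (F t) y (dF t)) ->
  is_derive (fun z => sumT T (fun t => F t z)) y (sumT T dF).
Proof.
  intros HF. induction T as [|T IH]; simpl; [apply (is_derive_const 0 y)|].
  now apply (is_derive_plus (fun z => sumT T (fun t => F t z)) (F T)).
Qed.

Lemma ln_rising r n : 0 < r -> ln (rising r n) = sumT n (fun j => ln (r + INR j)).
Proof.
  intros Hr. induction n as [|n IH]; simpl; [apply ln_1|].
  rewrite ln_mult, IH; [reflexivity|apply rising_pos; auto|pose proof (pos_INR n); lra].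
Qed.

Lemma ln_nb_pmf l a n : 0 < a -> 0 < l ->
  ln (nb_pmf l a n) = sumT n (fun j => ln (/ a + INR j)) - ln (INR (fact n))
                      + / a * ln (/ (1 + a * l)) + INR n * ln (a * l / (1 + a * l)).
Proof.
  intros Ha Hl. assert (0 < a * l) by nra. assert (Hr : 0 < / a) by now apply Rinv_0_lt_compat.
  assert (0 < a * l / (1 + a * l)) by (apply Rdiv_lt_0_compat; lra).
  pose proof (rising_pos (/ a) n Hr). pose proof (INR_fact_pos n).
  assert (HA : 0 < rising (/ a) n / INR (fact n)) by now apply Rdiv_lt_0_compat.
  assert (HE := exp_pos (/ a * ln (/ (1 + a * l)))).
  unfold nb_pmf, Rpower.
  rewrite ln_mult, ln_mult, ln_exp, ln_pow, ln_div, ln_rising; auto.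
  - now apply Rmult_lt_0_compat.
  - now apply pow_lt.
Qed.

Lemma is_derive_ln_nb_pmf_exp a n s : 0 < a ->
  is_derive (fun s => ln (nb_pmf (exp s) a n)) s ((INR n - exp s) / (1 + a * exp s)).
Proof.
  intros Ha.
  apply (is_derive_ext (fun s => sumT n (fun j => ln (/ a + INR j)) - ln (INR (fact n))
                        + / a * ln (/ (1 + a * exp s)) + INR n * ln (a * exp s / (1 + a * exp s)))).
  { intros z. rewrite ln_nb_pmf; auto. apply exp_pos. }
  pose proof (exp_pos s). assert (0 < a * exp s) by nra.
  auto_derive.
  - assert (0 < / (1 + a * exp s)) by (apply Rinv_0_lt_compat; lra).
    repeat split; try lra. apply Rdiv_lt_0_compat; lra.
  - field. lra.
Qed.

Lemma is_derive_upd_sumT (y : nat -> R) (b : nat -> R) p k z : (k < p)%nat ->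
  is_derive (fun z => sumT p (fun j => y j * upd b k z j)) z (y k).
Proof.
  intros Hk. rewrite <- (sumT_kronecker y p k Hk).
  apply (is_derive_sumT (fun j z => y j * upd b k z j)). intros j.
  apply (is_derive_scal (fun z => upd b k z j)). unfold upd.
  destruct (Nat.eqb j k); [apply (is_derive_id z)|apply (is_derive_const (b j) z)].
Qed.

Lemma score_beta_eq T p x b a N k : 0 < a -> (k < p)%nat ->
  score_beta T p x b a N k = sumT T (fun t => resid a (lam p x b t) (N t) * x t k).
Proof.
  intros Ha Hk. unfold score_beta, loglik. apply is_derive_unique.
  apply (is_derive_sumT (fun t bk => ln (nb_pmf (lam p x (upd b k bk) t) a (N t)))). intros t.
  set (s := fun z => sumT p (fun j => x t j * upd b k z j)).
  assert (Hs : exp (s (b k)) = lam p x b t).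
  { unfold s, lam. f_equal. apply sumT_ext. intros j _. unfold upd.
    destruct (Nat.eqb_spec j k); subst; reflexivity. }
  replace (resid a (lam p x b t) (N t) * x t k)
    with (x t k * ((INR (N t) - exp (s (b k))) / (1 + a * exp (s (b k)))))
    by (rewrite Hs; unfold resid; ring).
  apply (is_derive_comp (fun s => ln (nb_pmf (exp s) a (N t))) s).
  - now apply is_derive_ln_nb_pmf_exp.
  - now apply is_derive_upd_sumT.
Qed.

Lemma locally_pos y : 0 < y -> locally y (fun z => 0 < z).
Proof.
  intros Hy. exists (mkposreal y Hy). intros z Hz. simpl in Hz.
  unfold ball in Hz; simpl in Hz; unfold AbsRing_ball, abs, minus, plus, opp in Hz; simpl in Hz.
  apply Rabs_def2 in Hz. lra.
Qed.

Lemma is_derive_ln_nb_pmf_alpha l a n : 0 < a -> 0 < l ->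
  is_derive (fun a' => ln (nb_pmf l a' n)) a (alpha_score a l n).
Proof.
  intros Ha Hl. assert (0 < a * l) by nra. assert (0 < / a) by now apply Rinv_0_lt_compat.
  apply (is_derive_ext_loc (fun a' => sumT n (fun j => ln (/ a' + INR j)) - ln (INR (fact n))
          + / a' * ln (/ (1 + a' * l)) + INR n * ln (a' * l / (1 + a' * l)))).
  { apply (filter_imp (fun a' => 0 < a')); [|now apply locally_pos].
    intros a' Ha'. now rewrite ln_nb_pmf. }
  replace (alpha_score a l n)
    with (sumT n (fun j => - / a ^ 2 * / (/ a + INR j)) - 0
          + (- / a ^ 2 * ln (/ (1 + a * l)) + / a * (- l / (1 + a * l)))
          + INR n * (/ a - l / (1 + a * l))).
  2:{ unfold alpha_score, harm. rewrite sumT_scal, ln_Rinv by lra. field. lra. }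
  apply (is_derive_plus (fun a' => _ + / a' * ln (/ (1 + a' * l)))).
  - apply (is_derive_plus (fun a' => sumT n (fun j => ln (/ a' + INR j)) - ln (INR (fact n)))).
    + apply (is_derive_minus (fun a' => sumT n (fun j => ln (/ a' + INR j))));
        [|apply (is_derive_const (ln (INR (fact n))) a)].
      apply (is_derive_sumT (fun j a' => ln (/ a' + INR j))). intros j. pose proof (pos_INR j).
      auto_derive; [repeat split; lra|]. field. split; [lra|].
      assert (0 <= INR j * a) by (apply Rmult_le_pos; lra). lra.
    + auto_derive; [repeat split; try lra; apply Rinv_0_lt_compat; lra|]. field. lra.
  - apply (is_derive_scal (fun a' => ln (a' * l / (1 + a' * l)))).
    auto_derive; [repeat split; try lra; apply Rdiv_lt_0_compat; lra|]. field. lra.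
Qed.

Lemma score_alpha_eq T p x b a N : 0 < a ->
  score_alpha T p x b a N = sumT T (fun t => alpha_score a (lam p x b t) (N t)).
Proof.
  intros Ha. unfold score_alpha, loglik. apply is_derive_unique.
  apply (is_derive_sumT (fun t a' => ln (nb_pmf (lam p x b t) a' (N t)))).
  intros t. apply is_derive_ln_nb_pmf_alpha; auto. apply exp_pos.
Qed.

Lemma d2_beta_alpha_eq T p x b a N k : 0 < a -> (k < p)%nat ->
  d2_beta_alpha T p x b a N k
  = - sumT T (fun t => lam p x b t * x t k / (1 + a * lam p x b t) * resid a (lam p x b t) (N t)).
Proof.
  intros Ha Hk. unfold d2_beta_alpha. apply is_derive_unique. rewrite <- sumT_opp.
  apply (is_derive_ext_loc (fun a' => sumT T (fun t => resid a' (lam p x b t) (N t) * x t k))).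
  { apply (filter_imp (fun a' => 0 < a')); [|now apply locally_pos].
    intros a' Ha'. now rewrite score_beta_eq. }
  apply (is_derive_sumT (fun t a' => resid a' (lam p x b t) (N t) * x t k)). intros t.
  assert (0 < lam p x b t) by apply exp_pos. unfold resid.
  auto_derive; [nra|]. field. nra.
Qed.

(** * Moments of the scores *)

Section Scores.

Variable a : R.
Variable l : nat -> R.
Hypothesis a_pos : 0 < a.
Hypothesis l_pos : forall t, 0 < l t.

Local Notation pm := (fun t n => nb_pmf (l t) a n).

Let r_pos : 0 < / a.
Proof. now apply Rinv_0_lt_compat. Qed.

Let q_range t : 0 <= nb_prob a (l t) < 1.
Proof. now apply nb_prob_range. Qed.
Local Notation c t := (1 + a * l t).

Lemma coord_expect_nb t phi : coord_expect pm t phi = nb_expect (/ a) (nb_prob a (l t)) phi.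
Proof. unfold coord_expect, nb_expect. apply Series_ext. intros n. now rewrite nb_pmf_eq_nb_law. Qed.

Lemma nb_prob_family : prob_family pm.
Proof.
  split; [split|].
  - intros t n. rewrite nb_pmf_eq_nb_law by auto. now apply nb_law_nonneg.
  - intros t d. apply (ex_series_ext (fun n => nb_law (/ a) (nb_prob a (l t)) n * (1 + INR n) ^ d)).
    + intros n. now rewrite nb_pmf_eq_nb_law.
    + apply ex_series_nb_law; [auto|auto|poly_bounded].
  - intros t. rewrite coord_expect_nb.
    now apply nb_expect_const.
Qed.

Local Notation resid_sum m := (fun e => sumT m (fun t => resid a (l t) (e t))).

Lemma score_sigma2_S m e :
  score_sigma2 (S m) l a e
  = score_sigma2 m l a e + resid a (l m) (e m) * resid_sum m e + / 2 * gterm a (l m) (e m).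
Proof.
  assert (0 < c m) by (pose proof (l_pos m); nra).
  unfold score_sigma2, gterm, resid, vterm. cbn [sumT]. field. lra.
Qed.

Lemma score_sigma2_eq m e : score_sigma2 m l a e
  = / 2 * (resid_sum m e ^ 2 - sumT m (fun t => vterm a (l t) (e t))).
Proof. reflexivity. Qed.

Lemma regular_resid_sum m : regular m (resid_sum m).
Proof. apply (regular_sumT m (fun t => resid a (l t))). intros; apply poly_bounded_resid. Qed.

Lemma regular_score_sigma2 m : regular m (fun e => score_sigma2 m l a e).
Proof.
  apply (regular_ext _ _ _ (fun e => eq_sym (score_sigma2_eq m e))).
  assert (Hv : regular m (fun e => sumT m (fun t => vterm a (l t) (e t)))).
  { apply (regular_sumT m (fun t => vterm a (l t))). intros; unfold vterm; poly_bounded. }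
  assert (Hr := regular_resid_sum m). regular.
Qed.

Lemma Eiter_resid_sum m : Eiter pm m (resid_sum m) (fun _ => O) = 0.
Proof.
  apply (Eiter_centered_sum pm nb_prob_family (fun t => resid a (l t))).
  - intros; apply poly_bounded_resid.
  - intros t. rewrite coord_expect_nb. now apply nb_expect_resid.
Qed.

Lemma Eiter_resid_sum_sq m :
  Eiter pm m (fun e => resid_sum m e ^ 2) (fun _ => O) = sumT m (fun t => l t * c t / c t ^ 2).
Proof.
  rewrite (Eiter_centered_sum_sq pm nb_prob_family (fun t => resid a (l t))).
  - apply sumT_ext. intros t _. rewrite coord_expect_nb. now apply nb_expect_resid_sq.
  - intros; apply poly_bounded_resid.
  - intros t. rewrite coord_expect_nb. now apply nb_expect_resid.
Qed.

Lemma Eiter_score_sigma2_sq m :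
  Eiter pm m (fun N => score_sigma2 m l a N ^ 2) (fun _ => O)
  = / 4 * (sumT m (fun t => 2 * l t ^ 2 * (1 + a) / c t ^ 2)
           + 4 * sumT m (fun t => sumT m (fun t' =>
                   if (t <? t')%nat then l t * c t / c t ^ 2 * (l t' * c t' / c t' ^ 2) else 0))).
Proof.
  pose proof nb_prob_family as [Hpm Hmass].
  assert (HQ := regular_score_sigma2). assert (HS := regular_resid_sum).
  induction m as [|m IH]; [unfold score_sigma2; simpl; field|].
  assert (0 < c m) by (pose proof (l_pos m); nra).
  rewrite (Eiter_split pm m _
    [(fun e => score_sigma2 m l a e ^ 2, fun _ => 1);
     (fun e => resid_sum m e ^ 2, fun n => resid a (l m) n ^ 2);
     (fun _ => 1, fun n => / 4 * gterm a (l m) n ^ 2);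
     (fun e => score_sigma2 m l a e * resid_sum m e, fun n => 2 * resid a (l m) n);
     (fun e => score_sigma2 m l a e, gterm a (l m));
     (resid_sum m, fun n => resid a (l m) n * gterm a (l m) n)]);
    [|exact Hpm|split_regular|intros e; cbn [split_sum]; rewrite score_sigma2_S; cbv beta; field].
  cbn [split_expect]. rewrite !coord_expect_nb, !nb_expect_scal.
  rewrite IH, Eiter_resid_sum_sq, Eiter_resid_sum, Eiter_const_one by auto.
  rewrite nb_expect_const, nb_expect_resid_sq, nb_expect_gterm_sq, nb_expect_resid, nb_expect_gterm,
    nb_expect_resid_gterm by auto.
  rewrite (sumT_pairs_S (fun t => l t * c t / c t ^ 2)). cbn [sumT]. field. lra.
Qed.

Lemma Eiter_weighted_resid_sum (w : nat -> R) m :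
  Eiter pm m (fun e => sumT m (fun t => w t * resid a (l t) (e t))) (fun _ => O) = 0.
Proof.
  apply (Eiter_centered_sum pm nb_prob_family (fun t n => w t * resid a (l t) n)).
  - intros t. apply poly_bounded_mult; [apply poly_bounded_const|apply poly_bounded_resid].
  - intros t. rewrite coord_expect_scal, coord_expect_nb, nb_expect_resid; auto. ring.
Qed.

Section BetaScore.

Variable w : nat -> R.

Local Notation beta_sum m := (fun e => sumT m (fun t => resid a (l t) (e t) * w t)).

Lemma regular_beta_sum m : regular m (beta_sum m).
Proof.
  apply (regular_sumT m (fun t n => resid a (l t) n * w t)). intros t.
  apply poly_bounded_mult; [apply poly_bounded_resid|apply poly_bounded_const].
Qed.

Lemma Eiter_score_sigma2_mul_beta m :
  Eiter pm m (fun N => score_sigma2 m l a N * beta_sum m N) (fun _ => O) = 0.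
Proof.
  pose proof nb_prob_family as [Hpm Hmass].
  assert (HQ := regular_score_sigma2). assert (HS := regular_resid_sum).
  assert (HB := regular_beta_sum).
  induction m as [|m IH]; [simpl; ring|].
  rewrite (Eiter_split pm m _
    [(fun e => score_sigma2 m l a e * beta_sum m e, fun _ => 1);
     (fun e => score_sigma2 m l a e, fun n => w m * resid a (l m) n);
     (fun e => resid_sum m e * beta_sum m e, resid a (l m));
     (resid_sum m, fun n => w m * resid a (l m) n ^ 2);
     (beta_sum m, fun n => / 2 * gterm a (l m) n);
     (fun _ => 1, fun n => w m / 2 * (resid a (l m) n * gterm a (l m) n))]);
    [|exact Hpm|split_regular|intros e; cbn [split_sum sumT]; rewrite score_sigma2_S; cbv beta; field].
  cbn [split_expect]. rewrite !coord_expect_nb, !nb_expect_scal.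
  rewrite IH, Eiter_resid_sum, nb_expect_resid, nb_expect_gterm, nb_expect_resid_gterm by auto.
  ring.
Qed.

End BetaScore.

Local Notation alpha_sum m := (fun e => sumT m (fun t => alpha_score a (l t) (e t))).

Let alpha_bounded t : poly_bounded (alpha_score a (l t)).
Proof. now apply poly_bounded_alpha_score. Qed.

Lemma regular_alpha_sum m : regular m (alpha_sum m).
Proof. apply (regular_sumT m (fun t => alpha_score a (l t))). intros; apply alpha_bounded. Qed.

Lemma Eiter_score_sigma2_mul_alpha m :
  Eiter pm m (fun N => score_sigma2 m l a N * alpha_sum m N) (fun _ => O)
  = / 2 * sumT m (fun t => l t ^ 2 / c t ^ 2).
Proof.
  pose proof nb_prob_family as [Hpm Hmass].
  assert (HQ := regular_score_sigma2). assert (HS := regular_resid_sum).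
  assert (HA := regular_alpha_sum).
  induction m as [|m IH]; [unfold score_sigma2; simpl; ring|].
  rewrite (Eiter_split pm m _
    [(fun e => score_sigma2 m l a e * alpha_sum m e, fun _ => 1);
     (fun e => score_sigma2 m l a e, alpha_score a (l m));
     (fun e => resid_sum m e * alpha_sum m e, resid a (l m));
     (resid_sum m, fun n => resid a (l m) n * alpha_score a (l m) n);
     (alpha_sum m, fun n => / 2 * gterm a (l m) n);
     (fun _ => 1, fun n => / 2 * (gterm a (l m) n * alpha_score a (l m) n))]);
    [|exact Hpm|split_regular|intros e; cbn [split_sum sumT]; rewrite score_sigma2_S; cbv beta; field].
  cbn [split_expect]. rewrite !coord_expect_nb, !nb_expect_scal.
  rewrite IH, Eiter_resid_sum, Eiter_const_one, nb_expect_const, nb_expect_alpha_score, nb_expect_resid,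
    nb_expect_gterm, nb_expect_gterm_alpha_score by auto.
  cbn [sumT]. ring.
Qed.

Lemma Eiter_alpha_sum_sq m :
  Eiter pm m (fun e => alpha_sum m e ^ 2) (fun _ => O)
  = sumT m (fun t => / a ^ 4 * (nb_expect (/ a) (nb_prob a (l t)) (harm2 (/ a))
                                - a * l t / (l t + / a))).
Proof.
  rewrite (Eiter_centered_sum_sq pm nb_prob_family (fun t => alpha_score a (l t))).
  - apply sumT_ext. intros t _. rewrite coord_expect_nb. now apply nb_expect_alpha_score_sq.
  - exact alpha_bounded.
  - intros t. rewrite coord_expect_nb. now apply nb_expect_alpha_score.
Qed.

End Scores.

Theorem lemma1 (T p : nat) (x : nat -> nat -> R) (b : nat -> R) (a : R) :
  0 < a ->
  let l := lam p x b in
  let pm := fun t n => nb_pmf (l t) a n in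
  Expect T pm (fun N => (score_sigma2 T l a N) ^ 2)
    = / 4 * (sumT T (fun t => 2 * l t ^ 2 * (1 + a) / (1 + a * l t) ^ 2)
             + 4 * sumT T (fun t => sumT T (fun t' =>
                   if (t <? t')%nat then
                     l t * (1 + a * l t) / (1 + a * l t) ^ 2
                     * (l t' * (1 + a * l t') / (1 + a * l t') ^ 2)
                   else 0)))
  /\ (forall k, (k < p)%nat ->
        Expect T pm (fun N => score_sigma2 T l a N * score_beta T p x b a N k) = 0)
  /\ Expect T pm (fun N => score_sigma2 T l a N * score_alpha T p x b a N)
       = / 2 * sumT T (fun t => l t ^ 2 / (1 + a * l t) ^ 2)
  /\ (forall k, (k < p)%nat ->
        Expect T pm (fun N => - d2_beta_alpha T p x b a N k) = 0)
  /\ Expect T pm (fun N => (score_alpha T p x b a N) ^ 2)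
       = sumT T (fun t => / a ^ 4 *
           (Series (fun j => / (/ a + INR j) ^ 2 * tail_prob (pm t) (S j))
            - a * l t / (l t + / a))).
Proof.
  intros Ha l pm.
  assert (Hl : forall t, 0 < l t) by (intros; apply exp_pos).
  unfold Expect. repeat split.
  - now apply Eiter_score_sigma2_sq.
  - intros k Hk. rewrite <- (Eiter_score_sigma2_mul_beta a l Ha Hl (fun t => x t k) T).
    apply Eiter_ext. intros N. now rewrite score_beta_eq.
  - rewrite <- (Eiter_score_sigma2_mul_alpha a l Ha Hl T).
    apply Eiter_ext. intros N. now rewrite score_alpha_eq.
  - intros k Hk.
    rewrite <- (Eiter_weighted_resid_sum a l Ha Hl (fun t => l t * x t k / (1 + a * l t)) T).
    apply Eiter_ext. intros N. now rewrite d2_beta_alpha_eq, Ropp_involutive.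
  - rewrite (Eiter_ext _ _ _ (fun N => sumT T (fun t => alpha_score a (l t) (N t)) ^ 2))
      by (intros; now rewrite score_alpha_eq).
    unfold pm. rewrite Eiter_alpha_sum_sq by auto. apply sumT_ext. intros t _.
    rewrite <- nb_expect_harm2_tails by (auto using Rinv_0_lt_compat, nb_prob_range).
    do 2 f_equal. apply Series_ext. intros j. unfold tail_prob. f_equal.
    apply Series_ext. intros n. now rewrite nb_pmf_eq_nb_law.
Qed.
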